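(* There exist 4-GDDs of types $39^8 120^1$, $39^8 123^1$, $39^8 126^1$, $39^8 129^1$ and $39^8 132^1$.
   Context: A 4-GDD of type $g_1^{u_1}\cdots g_r^{u_r}$ is a triple $(V,\mathcal G,\mathcal B)$ where $V$ is a set of $u_1g_1+\cdots+u_rg_r$ points, $\mathcal G$ is a partition of $V$ into $u_i$ groups of size $g_i$ for each $i$, and $\mathcal B$ is a non-empty collection of 4-element subsets (blocks) such that every pair of points from distinct groups lies in exactly one block and no pair from the same group lies in any block. *)

From mathcomp Require Import all_boot.
Set Implicit Arguments. Unset Strict Implicit. Unset Printing Implicit Defensive.

(* A GDD type g_1^{u_1} ... g_r^{u_r} is encoded as the list [:: (g_1,u_1); ...; (g_r,u_r)]. *)
Definition gdd_type := seq (nat * nat).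

Definition type_sizes (t : gdd_type) : seq nat :=
  flatten [seq nseq p.2 p.1 | p <- t].

Definition type_points (t : gdd_type) : nat := \sum_(p <- t) p.2 * p.1.

Definition is_4GDD (T : finType) (t : gdd_type)
    (G : {set {set T}}) (B : {set {set T}}) : Prop :=
  [/\ #|T| = type_points t,
      partition G [set: T],
      perm_eq [seq #|X : {set T}| | X <- enum G] (type_sizes t) &
   [/\ B != set0,
      (forall b : {set T}, b \in B -> #|b| = 4),
      (forall x y, x != y -> pblock G x = pblock G y ->
         forall b : {set T}, b \in B -> ~~ ((x \in b) && (y \in b)))
    & (forall x y, pblock G x != pblock G y ->
         #|[set b in B | (x \in b) && (y \in b)]| = 1)]].

Definition exists_4GDD (t : gdd_type) : Prop :=
  exists (G B : {set {set 'I_(type_points t)}}), is_4GDD t G B.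

From mathcomp Require Import all_boot all_algebra zify.
Set Implicit Arguments. Unset Strict Implicit. Unset Printing Implicit Defensive.
Import GRing.Theory.

(* The designs are built by the difference method over Z_39.  The eight groups
   of size 39 are the copies {g} x Z_39, g < 8, and the group of size 3K
   consists of infinite points (j, r), j < K, r in Z_3.  A base block is either
   a quadruple of finite points from distinct groups, developed by all
   translations s in Z_39, or a triple of some class j, whose translate by s is
   completed by the infinite point (j, s mod 3).  Finite points (g1, x) and
   (g2, y) share one developed block for each occurrence of y - x among the
   differences from group g1 to group g2 in the base blocks; a finite point
   (g, x) and an infinite point (j, r) share one block for each point (g, u) of
   a triple of class j with u = x - r mod 3.  So every pair is covered exactly
   once as soon as those differences run through Z_39 exactly once and the
   triples of each class, reduced mod 3, cover {0..7} x Z_3 exactly once; both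
   conditions are checked by computation. *)

Lemma count_sum (T : Type) (P : pred T) (s : seq T) : count P s = \sum_(x <- s) P x.
Proof. by rewrite -sumn_count sumnE big_map. Qed.

Lemma count_allpairs (S T R : Type) (f : S -> T -> R) (P : pred R) s t :
  count P [seq f x y | x <- s, y <- t] = \sum_(x <- s) \sum_(y <- t) P (f x y).
Proof.
elim: s => [|x s IH]; rewrite ?big_nil ?big_cons //= count_cat IH count_map.
by rewrite count_sum.
Qed.

Lemma count_flatten_map (S T : Type) (f : S -> seq T) (P : pred T) s :
  count P (flatten [seq f x | x <- s]) = \sum_(x <- s) count P (f x).
Proof. by rewrite count_flatten sumnE !big_map. Qed.

Lemma uniq_map_inj_in (T U : eqType) (f : T -> U) (s : seq T) :
  uniq (map f s) -> {in s &, injective f}.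
Proof.
elim: s => //= x s IH /andP[fx_s /IH inj_s] y z.
rewrite !inE => /predU1P[-> | ys] /predU1P[-> | zs] // fyz.
- by move: fx_s; rewrite fyz map_f.
- by move: fx_s; rewrite -fyz map_f.
- exact: inj_s.
Qed.

Lemma card_set_count1 (T : finType) (P : pred {set T}) (s : seq {set T}) :
  count P s = 1 -> #|[set b in s | P b]| = 1.
Proof.
rewrite -size_filter; case Es: (filter P s) => [|b [|? ?]] // _.
apply/eqP/cards1P; exists b; apply/setP => b'.
by rewrite !inE andbC -mem_filter Es inE.
Qed.

Section Transport.
Variables (T T' : finType) (f : T -> T').
Hypothesis f_bij : bijective f.

Let f_inj : injective f := bij_inj f_bij.
Let fS (X : {set T}) : {set T'} := f @: X.

Lemma pblock_imset (P : {set {set T}}) x :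
  partition P [set: T] -> pblock [set fS X | X in P] (f x) = fS (pblock P x).
Proof.
move=> partP; have [/eqP covP tiP _] := and3P partP.
have Px : x \in cover P by rewrite covP inE.
apply: def_pblock; first by rewrite (imset_trivIset _ f_inj).
  by rewrite imset_f ?pblock_mem.
by rewrite imset_f ?mem_pblock.
Qed.

Lemma is_4GDD_imset t G B :
  is_4GDD t G B -> is_4GDD t [set fS X | X in G] [set fS b | b in B].
Proof.
case=> cardT partG sizesG [B0 cardB innerB crossB].
have fSI : injective fS := imset_inj f_inj.
have surj y : exists x, y = f x by have [g _ fK] := f_bij; exists (g y).
split.
- by rewrite -(bij_eq_card f_bij).
- have fT : f @: [set: T] = [set: T'].
    by apply/setP => y; have [x ->] := surj y; rewrite !inE imset_f.
  by rewrite -fT (imset_partition _ _ f_inj).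
- apply: perm_trans sizesG.
  have -> : [seq #|X : {set T}| | X <- enum G]
          = [seq #|X : {set T'}| | X <- map fS (enum G)].
    by rewrite -map_comp; apply: eq_map => X /=; rewrite card_imset.
  apply: perm_map; apply: uniq_perm; rewrite ?(map_inj_uniq fSI) ?enum_uniq // => Y.
  by rewrite mem_enum; apply/imsetP/mapP => -[X GX ->]; exists X; rewrite ?mem_enum in GX *.
split.
- by rewrite imset_eq0.
- by move=> _ /imsetP[b Bb ->]; rewrite card_imset ?cardB.
- move=> x' y' + + _ /imsetP[b Bb ->].
  case: (surj x') => x ->; case: (surj y') => y ->.
  rewrite (inj_eq f_inj) !pblock_imset // => xy /fSI Gxy.
  by rewrite !(mem_imset _ _ f_inj); apply: innerB.
move=> x' y'; case: (surj x') => x ->; case: (surj y') => y ->.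
rewrite !pblock_imset // (inj_eq fSI) => /crossB <-.
rewrite -(card_imset _ fSI); apply: eq_card => b'; rewrite inE.
apply/andP/imsetP => [[/imsetP[b Bb ->]] | [b]].
  by rewrite !(mem_imset _ _ f_inj) => xyb; exists b; rewrite // inE Bb.
by rewrite inE => /andP[Bb xyb] ->; rewrite imset_f // !(mem_imset _ _ f_inj).
Qed.

End Transport.

Lemma exists_4GDD_of (T : finType) t (G B : {set {set T}}) :
  is_4GDD t G B -> exists_4GDD t.
Proof.
move=> gdd; have [cardT _ _ _] := gdd.
pose f x : 'I_(type_points t) := cast_ord cardT (enum_rank x).
have f_bij : bijective f.
  exists (fun i => enum_val (cast_ord (esym cardT) i)) => x.
    by rewrite /f cast_ordK enum_rankK.
  by rewrite /f enum_valK cast_ordKV.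
by do 2!eexists; exact: (is_4GDD_imset f_bij gdd).
Qed.

Section LabelledBlocks.
Variables (T L : finType) (label : T -> L) (blocks : seq {set T}) (t : gdd_type).

Local Notation fibre l := [set x | label x == l].

Hypotheses (card_T : #|T| = type_points t)
  (fibre_sizes : perm_eq [seq #|fibre l| | l <- enum L] (type_sizes t))
  (label_surj : forall l, exists x, label x = l)
  (blocks_neq0 : blocks != [::])
  (card_blocks : forall b, b \in blocks -> #|b| = 4)
  (blocks_inner : forall x y b, x != y -> label x = label y -> b \in blocks ->
     ~~ ((x \in b) && (y \in b)))
  (blocks_cross : forall x y, label x != label y ->
     count (fun b : {set T} => (x \in b) && (y \in b)) blocks = 1).

Let G := preim_partition label [set: T].

Lemma pblock_preim_partition x : pblock G x = fibre (label x).
Proof.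
apply/setP => y; rewrite inE pblock_equivalence_partition ?inE //.
by split=> // /eqP ->.
Qed.

Lemma mem_preim_partition X : (X \in G) = (X \in [seq fibre l | l <- enum L]).
Proof.
apply/imsetP/mapP => [[x _ ->] | [l _ ->]].
  by exists (label x); rewrite ?mem_enum //; apply/setP => y; rewrite !inE eq_sym.
have [x <-] := label_surj l.
by exists x; rewrite ?inE //; apply/setP => y; rewrite !inE eq_sym.
Qed.

Lemma labelled_blocks_4GDD : is_4GDD t G [set b in blocks].
Proof.
split=> //.
- exact: preim_partitionP.
- apply: perm_trans fibre_sizes.
  rewrite (map_comp (fun X : {set T} => #|X|) (fun l => fibre l)).
  apply: perm_map; apply: uniq_perm.
  + exact: enum_uniq.
  + rewrite map_inj_uniq ?enum_uniq // => l l' /setP eq_ll'.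
    by have [x lx] := label_surj l; move: (eq_ll' x); rewrite !inE lx eqxx => /esym/eqP.
  + by move=> X; rewrite mem_enum mem_preim_partition.
split.
- by case: blocks blocks_neq0 => // b s _; apply/set0Pn; exists b; rewrite inE mem_head.
- by move=> b; rewrite inE; apply: card_blocks.
- move=> x y xy; rewrite !pblock_preim_partition => /setP /(_ y).
  by rewrite !inE eqxx => /eqP xy_lab b; rewrite inE; apply: blocks_inner.
move=> x y; rewrite !pblock_preim_partition => xy_lab.
have /blocks_cross/card_set_count1 <- : label x != label y.
  by apply: contra xy_lab => /eqP ->.
by apply: eq_card => b; rewrite !inE.
Qed.

End LabelledBlocks.

Section CyclicDevelopment.

Variables (I J : finType) (Z D : finZmodType) (phi : Z -> D).
Hypothesis phiB : {morph phi : x y / (x - y)%R}.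
Variable base : seq (seq (I * Z) * option J).

Local Notation point := ((I * Z) + (J * D))%type.

Definition shift (s : Z) (B : seq (I * Z)) : {set point} :=
  [set inl (p.1, (p.2 + s)%R) | p in B].

Definition dev_block (s : Z) (Bo : seq (I * Z) * option J) : {set point} :=
  if Bo.2 is Some j then inr (j, phi s) |: shift s Bo.1 else shift s Bo.1.

Definition development : seq {set point} :=
  [seq dev_block s Bo | Bo <- base, s <- enum Z].

Definition point_group (x : point) : option I :=
  if x is inl p then Some p.1 else None.

Definition diffs (g1 g2 : I) (B : seq (I * Z)) : seq Z :=
  [seq (q.2 - p.2)%R | p <- [seq p <- B | p.1 == g1], q <- [seq q <- B | q.1 == g2]].

Definition base_diffs (g1 g2 : I) : seq Z :=
  flatten [seq diffs g1 g2 Bo.1 | Bo <- base].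

Definition base_class (j : J) : seq (I * Z) :=
  flatten [seq Bo.1 | Bo <- base & Bo.2 == Some j].

Hypotheses
  (base_shape : forall Bo, Bo \in base ->
     uniq (map fst Bo.1) /\ size Bo.1 = if Bo.2 is Some _ then 3 else 4)
  (base_diffsP : forall g1 g2, g1 != g2 -> perm_eq (base_diffs g1 g2) (enum Z))
  (base_classP : forall j,
     perm_eq [seq (p.1, phi p.2) | p <- base_class j] (enum {: I * D}))
  (base_neq0 : base != [::])
  (J_gt0 : 0 < #|J|).

Lemma mem_shift_inl s B g z : (inl (g, z) \in shift s B) = ((g, (z - s)%R) \in B).
Proof.
apply/imsetP/idP => [[[g' u] Bp [-> ->]] | Bgz]; first by rewrite addrK.
by exists (g, (z - s)%R); rewrite //= subrK.
Qed.

Lemma mem_shift_inr s B a : (inr a \in shift s B) = false.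
Proof. by apply/imsetP => -[]. Qed.

Lemma mem_dev_block_inl s Bo q : (inl q \in dev_block s Bo) = (inl q \in shift s Bo.1).
Proof. by rewrite /dev_block; case: Bo.2 => // j; rewrite in_setU1. Qed.

Lemma mem_dev_block_inr s Bo j r :
  (inr (j, r) \in dev_block s Bo) = (Bo.2 == Some j) && (phi s == r).
Proof.
rewrite /dev_block; case: Bo.2 => [j'|]; rewrite ?in_setU1 mem_shift_inr // orbF.
by apply/eqP/andP => [[-> ->] | [/eqP[->] /eqP ->]].
Qed.

Lemma card_shift s B : uniq B -> #|shift s B| = size B.
Proof.
move=> uB; rewrite card_imset; first exact/card_uniqP.
by move=> [g u] [g' u'] [-> /addIr ->].
Qed.

Lemma card_dev_block s Bo : Bo \in base -> #|dev_block s Bo| = 4.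
Proof.
case/base_shape => /map_uniq uB; rewrite /dev_block.
by case: Bo.2 => [j|] sizeB; rewrite ?cardsU1 ?mem_shift_inr card_shift ?sizeB.
Qed.

Lemma sum_fibre_eq (B : seq (I * Z)) g z : uniq B ->
  \sum_(q <- B | q.1 == g) (q.2 == z) = ((g, z) \in B).
Proof.
move=> uB; rewrite -(count_uniq_mem _ uB) count_sum big_mkcond.
by apply: eq_bigr => -[a b] _; rewrite /= xpair_eqE; case: (a == g).
Qed.

Lemma sum_mem_fibre (B : seq (I * Z)) g (F : Z -> nat) : uniq B ->
  \sum_(u : Z) ((g, u) \in B) * F u = \sum_(q <- B | q.1 == g) F q.2.
Proof.
move=> uB; transitivity (\sum_(u : Z) \sum_(q <- B | q.1 == g) (q.2 == u) * F u).
  by apply: eq_bigr => u _; rewrite -big_distrl /= sum_fibre_eq.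
rewrite exchange_big; apply: eq_bigr => q _ /=.
rewrite (bigD1 q.2) //= eqxx mul1n big1 ?addn0 // => u.
by rewrite eq_sym => /negPf ->.
Qed.

Lemma sum_shift_pair (B : seq (I * Z)) g1 g2 x y : uniq B ->
  \sum_(s : Z) ((inl (g1, x) \in shift s B) && (inl (g2, y) \in shift s B))
  = count_mem (y - x)%R (diffs g1 g2 B).
Proof.
move=> uB; have yxu u : (y - (x - u) = u + (y - x))%R by rewrite opprB addrCA.
under eq_bigr => s _ do rewrite !mem_shift_inl.
rewrite (reindex_inj (subrI x)) /=.
under eq_bigr => u _ do rewrite subKr yxu -mulnb.
rewrite sum_mem_fibre // /diffs count_allpairs big_filter; apply: eq_bigr => p _.
rewrite big_filter -sum_fibre_eq //; apply: eq_bigr => q _.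
by rewrite /= subr_eq (addrC (y - x)%R).
Qed.

Lemma sum_shift_class (B : seq (I * Z)) g x r : uniq B ->
  \sum_(s : Z | phi s == r) (inl (g, x) \in shift s B)
  = count (fun p => (p.1 == g) && (phi p.2 == (phi x - r)%R)) B.
Proof.
move=> uB; have phi_xu u : (phi (x - u)%R == r) = (phi u == phi x - r)%R.
  by rewrite phiB subr_eq [RHS]eq_sym subr_eq addrC.
rewrite (reindex_inj (subrI x)) /=.
under eq_bigl => u do rewrite phi_xu.
under eq_bigr => u _ do rewrite mem_shift_inl subKr.
rewrite big_mkcond (eq_bigr (fun u => ((g, u) \in B) * (phi u == phi x - r)%R));
  last by move=> u _; case: (_ == _); rewrite ?muln1 ?muln0.
rewrite sum_mem_fibre // count_sum big_mkcond; apply: eq_bigr => q _.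
by case: (q.1 == g).
Qed.

Lemma count_development (P : pred {set point}) :
  count P development = \sum_(Bo <- base) \sum_(s : Z) P (dev_block s Bo).
Proof. by rewrite count_allpairs; apply: eq_bigr => Bo _; rewrite big_enum. Qed.

Lemma development_cross_finite (g1 g2 : I) (x y : Z) : g1 != g2 ->
  count (fun b : {set point} => (inl (g1, x) \in b) && (inl (g2, y) \in b))
    development = 1.
Proof.
move=> g12; rewrite count_development.
transitivity (\sum_(Bo <- base) count_mem (y - x)%R (diffs g1 g2 Bo.1)).
  rewrite !big_seq; apply: eq_bigr => Bo /base_shape[/map_uniq uB _].
  by under eq_bigr => s _ do rewrite !mem_dev_block_inl; rewrite sum_shift_pair.
rewrite -count_flatten_map (permP (base_diffsP g12)).
by rewrite count_uniq_mem ?enum_uniq ?mem_enum.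
Qed.

Lemma development_cross_infinite (g : I) (x : Z) (j : J) (r : D) :
  count (fun b : {set point} => (inl (g, x) \in b) && (inr (j, r) \in b))
    development = 1.
Proof.
rewrite count_development.
transitivity (\sum_(Bo <- base | Bo.2 == Some j)
                count (fun p => (p.1 == g) && (phi p.2 == phi x - r)%R) Bo.1).
  rewrite [RHS]big_mkcond !big_seq; apply: eq_bigr => Bo /base_shape[/map_uniq uB _].
  under eq_bigr => s _ do rewrite mem_dev_block_inl mem_dev_block_inr andbCA.
  case: (Bo.2 == Some j); last by rewrite big1.
  rewrite -sum_shift_class // [RHS]big_mkcond; apply: eq_bigr => s _ /=.
  by case: (phi s == r); rewrite ?andbT ?andbF.
rewrite -big_filter -count_flatten_map -/(base_class j).
rewrite (_ : count _ _
  = count_mem (g, phi x - r)%R [seq (p.1, phi p.2) | p <- base_class j]).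
  by rewrite (permP (base_classP j)) count_uniq_mem ?enum_uniq ?mem_enum.
by rewrite count_map; apply: eq_count => p; rewrite /= xpair_eqE.
Qed.

Lemma development_inner (x y : point) b : x != y -> point_group x = point_group y ->
  b \in development -> ~~ ((x \in b) && (y \in b)).
Proof.
move=> + + /allpairsP[[Bo s] [Bo_base _ ->]] /=.
case: x y => [[g u]|[j r]] [[g' v]|[j' r']] //=.
  move=> xy [gg']; rewrite -gg' in xy *.
  rewrite !mem_dev_block_inl !mem_shift_inl; apply/andP => -[gu gv].
  have [/uniq_map_inj_in inj_fst _] := base_shape Bo_base.
  by case: (inj_fst _ _ gu gv erefl) => /addIr uv; rewrite uv eqxx in xy.
move=> xy _; rewrite !mem_dev_block_inr; apply/andP.
case=> /andP[/eqP Bj /eqP sr] /andP[/eqP Bj' /eqP sr'].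
by move: Bj'; rewrite Bj => -[jj']; rewrite -sr -sr' jj' eqxx in xy.
Qed.

Lemma card_group_fibre l :
  #|[set x | point_group x == l]| = if l is Some _ then #|Z| else #|J| * #|D|.
Proof.
case: l => [g|].
  rewrite -cardsT -(card_imset [set: Z] (f := fun z => inl (g, z) : point)); last first.
    by move=> z z' [].
  apply: eq_card => -[[g' z]|a]; rewrite !inE /=.
    by apply/eqP/imsetP => [[->] | [u _ [-> _]]] //; exists z.
  by apply/esym/imsetP => -[].
rewrite -card_prod -cardsT -(card_imset [set: J * D] (f := inr : J * D -> point)); last first.
  by move=> ? ? [].
apply: eq_card => -[p|a]; rewrite !inE /=; first by apply/esym/imsetP => -[].
by rewrite imset_f ?inE.
Qed.

Lemma enum_option_perm : perm_eq (enum {: option I}) (None :: map Some (enum I)).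
Proof.
apply: uniq_perm; rewrite ?enum_uniq //=.
  by rewrite (map_inj_uniq (@Some_inj _)) enum_uniq andbT; apply/mapP => -[].
by move=> [g|]; rewrite mem_enum inE /= ?in_cons ?mem_head // map_f ?mem_enum ?orbT.
Qed.

Theorem development_is_4GDD :
  is_4GDD [:: (#|Z|, #|I|); (#|J| * #|D|, 1)]
    (preim_partition point_group [set: point]) [set b in development].
Proof.
apply: labelled_blocks_4GDD.
- by rewrite /type_points !big_cons big_nil card_sum !card_prod addn0 mul1n.
- apply: perm_trans (perm_map _ enum_option_perm) _.
  rewrite /= !card_group_fibre -map_comp (eq_map (fun g => card_group_fibre (Some g))).
  have -> : [seq #|Z| | _ <- enum I] = nseq #|I| #|Z|.
    by rewrite [#|I|]cardE; elim: (enum I) => //= ? ? ->.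
  by rewrite /type_sizes /= cats1 perm_sym perm_rcons.
- case=> [g|]; first by exists (inl (g, 0%R)).
  by have [j _] := card_gt0P J_gt0; exists (inr (j, 0%R)).
- have [Bo Bo_base] : exists Bo, Bo \in base.
    by case: base base_neq0 => // Bo ? _; exists Bo; rewrite mem_head.
  apply/eqP => dev0.
  have := allpairs_f (fun Bo s => dev_block s Bo) Bo_base (mem_enum Z 0%R).
  by rewrite -/development dev0.
- by move=> _ /allpairsP[[Bo s] [Bo_base _ ->]]; apply: card_dev_block.
- by move=> x y b; apply: development_inner.
case=> [[g1 x]|[j r]] [[g2 y]|[j' r']] //= g12.
- by apply: development_cross_finite; apply: contra g12 => /eqP ->.
- exact: development_cross_infinite.
- by rewrite (eq_count (fun b => andbC _ _)); apply: development_cross_infinite.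
Qed.

End CyclicDevelopment.

(* [enum 'I_n] builds its elements through [insub], whose proof argument
   blocks [vm_compute] (it matches on the opaque [idP]); [ords n] enumerates
   ['I_n.+1] through [inZp] instead, and class indices are taken in
   ['I_(size cls).-1.+1] so that they can be enumerated the same way. *)
Definition ords n : seq 'I_n.+1 := [seq inZp i | i <- iota 0 n.+1].

Lemma mem_ords n (x : 'I_n.+1) : x \in ords n.
Proof. by apply/mapP; exists (val x); rewrite ?valZpK // mem_iota ltn_ord. Qed.

Lemma uniq_ords n : uniq (ords n).
Proof.
rewrite map_inj_in_uniq ?iota_uniq // => i k; rewrite !mem_iota /= => ilt klt /(congr1 val).
by rewrite /= !modn_small.
Qed.

Lemma perm_ords n : perm_eq (ords n) (enum 'I_n.+1).
Proof.
by apply: uniq_perm; rewrite ?uniq_ords ?enum_uniq // => x; rewrite mem_ords mem_enum.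
Qed.

Lemma perm_ords_pairs m n :
  perm_eq [seq (g, r) | g <- ords m, r <- ords n] (enum {: 'I_m.+1 * 'I_n.+1}).
Proof.
apply: uniq_perm; rewrite ?enum_uniq //.
  by rewrite allpairs_uniq ?uniq_ords // => -[? ?] [? ?] _ _ [-> ->].
by move=> [g r]; rewrite mem_enum allpairs_f ?mem_ords.
Qed.

Lemma all_ordsP n (P : pred 'I_n.+1) : all P (ords n) -> forall x, P x.
Proof. by move/allP => allP x; apply: allP (mem_ords x). Qed.

Definition Z39_point (p : nat * nat) : 'I_8 * 'Z_39 := (inZp p.1, inZp p.2).

Definition mod3 (x : 'Z_39) : 'Z_3 := inZp x.

Lemma mod3B : {morph mod3 : x y / (x - y)%R}.
Proof.
move=> x y; apply: val_inj => /=; have := ltn_ord x; have := ltn_ord y.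
rewrite /Zp_trunc /=; lia.
Qed.

Definition base39 (cls : seq (seq (seq (nat * nat)))) (qds : seq (seq (nat * nat)))
    : seq (seq ('I_8 * 'Z_39) * option 'I_(size cls).-1.+1) :=
  [seq (map Z39_point T, Some j)
    | j : 'I_(size cls).-1.+1 <- ords (size cls).-1, T <- nth [::] cls j]
  ++ [seq (map Z39_point Q, None) | Q <- qds].

Definition base39_ok cls qds : bool :=
  let b := base39 cls qds in
  [&& 0 < size cls, b != [::],
      all (fun Bo => uniq (map fst Bo.1) &&
                     (size Bo.1 == if Bo.2 is Some _ then 3 else 4)) b,
      all (fun g1 => all (fun g2 =>
             (g1 != g2) ==> perm_eq (base_diffs b g1 g2) (ords 38)) (ords 7)) (ords 7) &
      all (fun j => perm_eq [seq (p.1, mod3 p.2) | p <- base_class b j]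
                            [seq (g, r) | g <- ords 7, r <- ords 2]) (ords (size cls).-1)].

Lemma exists_4GDD_39_8 cls qds :
  base39_ok cls qds -> exists_4GDD [:: (39, 8); (3 * size cls, 1)].
Proof.
case/and5P => cls_gt0 base_neq0 /allP shapeP diffsP classP.
have -> : [:: (39, 8); (3 * size cls, 1)]
        = [:: (#|'Z_39|, #|'I_8|); (#|'I_(size cls).-1.+1| * #|'Z_3|, 1)].
  by rewrite !card_ord prednK // mulnC.
apply: exists_4GDD_of (development_is_4GDD mod3B _ _ _ base_neq0 _).
- by move=> Bo /shapeP /andP[-> /eqP].
- move=> g1 g2 g12; apply: perm_trans (perm_ords 38).
  by have /all_ordsP/(_ g2)/implyP := all_ordsP diffsP g1; apply.
- move=> j; apply: perm_trans (perm_ords_pairs 7 2).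
  exact: all_ordsP classP j.
- by rewrite card_ord.
Qed.

(* Base blocks: [(g, x)] is the point [x] of [Z_39] in group [g]; each class
   is a list of eight triples, and the quads are developed without infinite
   point. *)
Definition classes40 : seq (seq (seq (nat * nat))) :=
  [:: [:: [:: (3,0); (5,27); (4,20)]; [:: (0,0); (5,14); (1,7)]; [:: (4,13); (2,15); (1,30)]; [:: (2,13); (6,14); (4,18)]; [:: (0,26); (1,14); (3,2)]; [:: (6,0); (5,4); (7,6)]; [:: (2,26); (7,1); (6,16)]; [:: (0,13); (3,1); (7,2)]];
     [:: [:: (3,0); (5,21); (4,17)]; [:: (0,0); (5,8); (1,4)]; [:: (4,13); (2,3); (1,6)]; [:: (2,13); (6,8); (4,27)]; [:: (0,26); (1,8); (3,29)]; [:: (6,0); (5,19); (7,9)]; [:: (2,26); (7,34); (6,37)]; [:: (0,13); (3,34); (7,29)]];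
     [:: [:: (3,0); (5,12); (4,32)]; [:: (0,0); (5,38); (1,19)]; [:: (4,13); (2,24); (1,9)]; [:: (2,13); (6,38); (4,21)]; [:: (0,26); (1,38); (3,11)]; [:: (6,0); (5,22); (7,33)]; [:: (2,26); (7,25); (6,10)]; [:: (0,13); (3,25); (7,11)]];
     [:: [:: (3,0); (5,18); (4,35)]; [:: (0,0); (5,5); (1,22)]; [:: (4,13); (2,36); (1,33)]; [:: (2,13); (6,5); (4,12)]; [:: (0,26); (1,5); (3,23)]; [:: (6,0); (5,7); (7,30)]; [:: (2,26); (7,31); (6,28)]; [:: (0,13); (3,31); (7,23)]];
     [:: [:: (4,0); (6,27); (5,20)]; [:: (1,0); (6,14); (2,4)]; [:: (5,13); (3,15); (2,30)]; [:: (3,13); (0,2); (5,18)]; [:: (1,26); (2,17); (4,2)]; [:: (0,0); (6,1); (7,3)]; [:: (3,26); (7,1); (0,31)]; [:: (1,13); (4,1); (7,5)]];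
     [:: [:: (4,0); (6,21); (5,17)]; [:: (1,0); (6,8); (2,19)]; [:: (5,13); (3,3); (2,6)]; [:: (3,13); (0,29); (5,27)]; [:: (1,26); (2,32); (4,29)]; [:: (0,0); (6,34); (7,24)]; [:: (3,26); (7,34); (0,1)]; [:: (1,13); (4,34); (7,14)]];
     [:: [:: (4,0); (6,12); (5,32)]; [:: (1,0); (6,38); (2,22)]; [:: (5,13); (3,24); (2,9)]; [:: (3,13); (0,11); (5,21)]; [:: (1,26); (2,35); (4,11)]; [:: (0,0); (6,25); (7,36)]; [:: (3,26); (7,25); (0,34)]; [:: (1,13); (4,25); (7,8)]];
     [:: [:: (4,0); (6,18); (5,35)]; [:: (1,0); (6,5); (2,7)]; [:: (5,13); (3,36); (2,33)]; [:: (3,13); (0,23); (5,12)]; [:: (1,26); (2,20); (4,23)]; [:: (0,0); (6,31); (7,15)]; [:: (3,26); (7,31); (0,25)]; [:: (1,13); (4,31); (7,38)]];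
     [:: [:: (5,0); (0,27); (6,5)]; [:: (2,0); (0,14); (3,31)]; [:: (6,13); (4,27); (3,18)]; [:: (4,13); (1,17); (6,27)]; [:: (2,26); (3,14); (5,17)]; [:: (1,0); (0,28); (7,27)]; [:: (4,26); (7,1); (1,16)]; [:: (2,13); (5,1); (7,20)]];
     [:: [:: (5,0); (0,21); (6,14)]; [:: (2,0); (0,8); (3,1)]; [:: (6,13); (4,21); (3,27)]; [:: (4,13); (1,32); (6,21)]; [:: (2,26); (3,8); (5,32)]; [:: (1,0); (0,16); (7,21)]; [:: (4,26); (7,34); (1,37)]; [:: (2,13); (5,34); (7,17)]];
     [:: [:: (5,0); (0,12); (6,8)]; [:: (2,0); (0,38); (3,34)]; [:: (6,13); (4,12); (3,21)]; [:: (4,13); (1,35); (6,12)]; [:: (2,26); (3,38); (5,35)]; [:: (1,0); (0,37); (7,12)]; [:: (4,26); (7,25); (1,10)]; [:: (2,13); (5,25); (7,32)]];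
     [:: [:: (5,0); (0,18); (6,38)]; [:: (2,0); (0,5); (3,25)]; [:: (6,13); (4,18); (3,12)]; [:: (4,13); (1,20); (6,18)]; [:: (2,26); (3,5); (5,20)]; [:: (1,0); (0,10); (7,18)]; [:: (4,26); (7,31); (1,28)]; [:: (2,13); (5,31); (7,35)]];
     [:: [:: (6,0); (1,27); (0,29)]; [:: (3,0); (1,17); (4,1)]; [:: (0,13); (5,15); (4,21)]; [:: (5,13); (2,14); (0,30)]; [:: (3,26); (4,14); (6,29)]; [:: (2,0); (1,28); (7,30)]; [:: (5,26); (7,4); (2,16)]; [:: (3,13); (6,1); (7,20)]];
     [:: [:: (6,0); (1,21); (0,11)]; [:: (3,0); (1,32); (4,34)]; [:: (0,13); (5,3); (4,12)]; [:: (5,13); (2,8); (0,6)]; [:: (3,26); (4,8); (6,11)]; [:: (2,0); (1,16); (7,6)]; [:: (5,26); (7,19); (2,37)]; [:: (3,13); (6,34); (7,17)]];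
     [:: [:: (6,0); (1,12); (0,23)]; [:: (3,0); (1,35); (4,25)]; [:: (0,13); (5,24); (4,18)]; [:: (5,13); (2,38); (0,9)]; [:: (3,26); (4,38); (6,23)]; [:: (2,0); (1,37); (7,9)]; [:: (5,26); (7,22); (2,10)]; [:: (3,13); (6,25); (7,32)]];
     [:: [:: (6,0); (1,18); (0,2)]; [:: (3,0); (1,20); (4,31)]; [:: (0,13); (5,36); (4,27)]; [:: (5,13); (2,5); (0,33)]; [:: (3,26); (4,5); (6,2)]; [:: (2,0); (1,10); (7,33)]; [:: (5,26); (7,7); (2,28)]; [:: (3,13); (6,31); (7,35)]];
     [:: [:: (0,0); (2,27); (1,17)]; [:: (4,0); (2,17); (5,1)]; [:: (1,13); (6,15); (5,30)]; [:: (6,13); (3,14); (1,6)]; [:: (4,26); (5,14); (0,17)]; [:: (3,0); (2,1); (7,30)]; [:: (6,26); (7,1); (3,19)]; [:: (4,13); (0,28); (7,14)]];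
     [:: [:: (0,0); (2,21); (1,32)]; [:: (4,0); (2,32); (5,34)]; [:: (1,13); (6,3); (5,6)]; [:: (6,13); (3,8); (1,9)]; [:: (4,26); (5,8); (0,32)]; [:: (3,0); (2,34); (7,6)]; [:: (6,26); (7,34); (3,22)]; [:: (4,13); (0,16); (7,8)]];
     [:: [:: (0,0); (2,12); (1,35)]; [:: (4,0); (2,35); (5,25)]; [:: (1,13); (6,24); (5,9)]; [:: (6,13); (3,38); (1,33)]; [:: (4,26); (5,38); (0,35)]; [:: (3,0); (2,25); (7,9)]; [:: (6,26); (7,25); (3,7)]; [:: (4,13); (0,37); (7,38)]];
     [:: [:: (0,0); (2,18); (1,20)]; [:: (4,0); (2,20); (5,31)]; [:: (1,13); (6,36); (5,33)]; [:: (6,13); (3,5); (1,30)]; [:: (4,26); (5,5); (0,20)]; [:: (3,0); (2,31); (7,33)]; [:: (6,26); (7,31); (3,4)]; [:: (4,13); (0,10); (7,5)]];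
     [:: [:: (1,0); (3,15); (2,17)]; [:: (5,0); (3,14); (6,31)]; [:: (2,13); (0,15); (6,6)]; [:: (0,13); (4,17); (2,27)]; [:: (5,26); (6,17); (1,8)]; [:: (4,0); (3,1); (7,18)]; [:: (0,26); (7,28); (4,4)]; [:: (5,13); (1,4); (7,8)]];
     [:: [:: (1,0); (3,3); (2,32)]; [:: (5,0); (3,8); (6,1)]; [:: (2,13); (0,3); (6,9)]; [:: (0,13); (4,32); (2,21)]; [:: (5,26); (6,32); (1,38)]; [:: (4,0); (3,34); (7,27)]; [:: (0,26); (7,16); (4,19)]; [:: (5,13); (1,19); (7,38)]];
     [:: [:: (1,0); (3,24); (2,35)]; [:: (5,0); (3,38); (6,34)]; [:: (2,13); (0,24); (6,33)]; [:: (0,13); (4,35); (2,12)]; [:: (5,26); (6,35); (1,5)]; [:: (4,0); (3,25); (7,21)]; [:: (0,26); (7,37); (4,22)]; [:: (5,13); (1,22); (7,5)]];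
     [:: [:: (1,0); (3,36); (2,20)]; [:: (5,0); (3,5); (6,25)]; [:: (2,13); (0,36); (6,30)]; [:: (0,13); (4,20); (2,18)]; [:: (5,26); (6,20); (1,14)]; [:: (4,0); (3,31); (7,12)]; [:: (0,26); (7,10); (4,7)]; [:: (5,13); (1,7); (7,14)]];
     [:: [:: (2,0); (4,27); (3,17)]; [:: (6,0); (4,2); (0,1)]; [:: (3,13); (1,27); (0,3)]; [:: (1,13); (5,14); (3,30)]; [:: (6,26); (0,2); (2,17)]; [:: (5,0); (4,1); (7,18)]; [:: (1,26); (7,1); (5,31)]; [:: (6,13); (2,28); (7,14)]];
     [:: [:: (2,0); (4,21); (3,32)]; [:: (6,0); (4,29); (0,34)]; [:: (3,13); (1,21); (0,24)]; [:: (1,13); (5,8); (3,6)]; [:: (6,26); (0,29); (2,32)]; [:: (5,0); (4,34); (7,27)]; [:: (1,26); (7,34); (5,1)]; [:: (6,13); (2,16); (7,8)]];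
     [:: [:: (2,0); (4,12); (3,35)]; [:: (6,0); (4,11); (0,25)]; [:: (3,13); (1,12); (0,36)]; [:: (1,13); (5,38); (3,9)]; [:: (6,26); (0,11); (2,35)]; [:: (5,0); (4,25); (7,21)]; [:: (1,26); (7,25); (5,34)]; [:: (6,13); (2,37); (7,38)]];
     [:: [:: (2,0); (4,18); (3,20)]; [:: (6,0); (4,23); (0,31)]; [:: (3,13); (1,18); (0,15)]; [:: (1,13); (5,5); (3,33)]; [:: (6,26); (0,23); (2,20)]; [:: (5,0); (4,31); (7,12)]; [:: (1,26); (7,31); (5,25)]; [:: (6,13); (2,10); (7,5)]];
     [:: [:: (0,0); (1,30); (6,27)]; [:: (0,26); (1,1); (3,30)]; [:: (2,0); (3,2); (4,6)]; [:: (2,26); (5,4); (7,2)]; [:: (1,26); (5,15); (6,4)]; [:: (2,13); (4,14); (7,30)]; [:: (0,13); (3,4); (4,1)]; [:: (5,26); (6,14); (7,31)]];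
     [:: [:: (0,0); (1,6); (6,21)]; [:: (0,26); (1,34); (3,6)]; [:: (2,0); (3,29); (4,9)]; [:: (2,26); (5,19); (7,29)]; [:: (1,26); (5,3); (6,19)]; [:: (2,13); (4,8); (7,6)]; [:: (0,13); (3,19); (4,34)]; [:: (5,26); (6,8); (7,1)]];
     [:: [:: (0,0); (1,9); (6,12)]; [:: (0,26); (1,25); (3,9)]; [:: (2,0); (3,11); (4,33)]; [:: (2,26); (5,22); (7,11)]; [:: (1,26); (5,24); (6,22)]; [:: (2,13); (4,38); (7,9)]; [:: (0,13); (3,22); (4,25)]; [:: (5,26); (6,38); (7,34)]];
     [:: [:: (0,0); (1,33); (6,18)]; [:: (0,26); (1,31); (3,33)]; [:: (2,0); (3,23); (4,30)]; [:: (2,26); (5,7); (7,23)]; [:: (1,26); (5,36); (6,7)]; [:: (2,13); (4,5); (7,33)]; [:: (0,13); (3,7); (4,31)]; [:: (5,26); (6,5); (7,25)]];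
     [:: [:: (1,0); (2,27); (6,31)]; [:: (1,26); (2,1); (4,18)]; [:: (0,0); (4,2); (5,30)]; [:: (0,26); (3,1); (7,4)]; [:: (2,26); (3,30); (6,14)]; [:: (0,13); (5,14); (7,17)]; [:: (1,13); (4,4); (5,28)]; [:: (3,26); (6,15); (7,3)]];
     [:: [:: (1,0); (2,21); (6,1)]; [:: (1,26); (2,34); (4,27)]; [:: (0,0); (4,29); (5,6)]; [:: (0,26); (3,34); (7,19)]; [:: (2,26); (3,6); (6,8)]; [:: (0,13); (5,8); (7,32)]; [:: (1,13); (4,19); (5,16)]; [:: (3,26); (6,3); (7,24)]];
     [:: [:: (1,0); (2,12); (6,34)]; [:: (1,26); (2,25); (4,21)]; [:: (0,0); (4,11); (5,9)]; [:: (0,26); (3,25); (7,22)]; [:: (2,26); (3,9); (6,38)]; [:: (0,13); (5,38); (7,35)]; [:: (1,13); (4,22); (5,37)]; [:: (3,26); (6,24); (7,36)]];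
     [:: [:: (1,0); (2,18); (6,25)]; [:: (1,26); (2,31); (4,12)]; [:: (0,0); (4,23); (5,33)]; [:: (0,26); (3,31); (7,7)]; [:: (2,26); (3,33); (6,5)]; [:: (0,13); (5,5); (7,20)]; [:: (1,13); (4,7); (5,10)]; [:: (3,26); (6,36); (7,15)]];
     [:: [:: (2,0); (0,30); (6,14)]; [:: (2,26); (0,4); (5,21)]; [:: (1,0); (5,2); (3,6)]; [:: (1,26); (4,1); (7,3)]; [:: (0,26); (4,15); (6,6)]; [:: (1,13); (3,2); (7,4)]; [:: (2,13); (5,28); (3,19)]; [:: (4,26); (6,28); (7,17)]];
     [:: [:: (2,0); (0,6); (6,8)]; [:: (2,26); (0,19); (5,12)]; [:: (1,0); (5,29); (3,9)]; [:: (1,26); (4,34); (7,24)]; [:: (0,26); (4,3); (6,9)]; [:: (1,13); (3,29); (7,19)]; [:: (2,13); (5,16); (3,22)]; [:: (4,26); (6,16); (7,32)]];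
     [:: [:: (2,0); (0,9); (6,38)]; [:: (2,26); (0,22); (5,18)]; [:: (1,0); (5,11); (3,33)]; [:: (1,26); (4,25); (7,36)]; [:: (0,26); (4,24); (6,33)]; [:: (1,13); (3,11); (7,22)]; [:: (2,13); (5,37); (3,7)]; [:: (4,26); (6,37); (7,35)]];
     [:: [:: (2,0); (0,33); (6,5)]; [:: (2,26); (0,7); (5,27)]; [:: (1,0); (5,23); (3,30)]; [:: (1,26); (4,31); (7,15)]; [:: (0,26); (4,36); (6,30)]; [:: (1,13); (3,23); (7,7)]; [:: (2,13); (5,10); (3,4)]; [:: (4,26); (6,10); (7,20)]]].

Definition quads40 : seq (seq (nat * nat)) :=
  [:: [:: (0,0); (1,1); (2,32); (7,21)];
     [:: (0,0); (1,34); (2,35); (7,12)];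
     [:: (0,0); (1,25); (2,20); (7,18)];
     [:: (0,0); (1,31); (2,17); (7,27)];
     [:: (3,0); (4,2); (5,4); (6,6)];
     [:: (3,0); (4,29); (5,19); (6,9)];
     [:: (3,0); (4,11); (5,22); (6,33)];
     [:: (3,0); (4,23); (5,7); (6,30)];
     [:: (0,0); (1,0); (2,0); (3,0)];
     [:: (0,0); (1,13); (2,26); (4,0)];
     [:: (0,0); (1,26); (5,0); (6,0)];
     [:: (0,0); (3,13); (4,26); (5,13)];
     [:: (0,0); (4,13); (5,26); (7,0)];
     [:: (0,0); (3,26); (6,13); (7,26)];
     [:: (0,0); (2,13); (6,26); (7,13)];
     [:: (1,0); (2,26); (5,26); (7,13)];
     [:: (2,0); (3,13); (4,0); (6,26)];
     [:: (1,0); (4,0); (6,0); (7,0)];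
     [:: (1,0); (3,13); (4,13); (7,26)];
     [:: (1,0); (3,26); (5,0); (6,26)];
     [:: (2,0); (3,26); (5,13); (7,13)];
     [:: (2,0); (4,26); (5,26); (6,0)]].

Definition classes41 : seq (seq (seq (nat * nat))) :=
  [:: [:: [:: (3,0); (5,27); (4,20)]; [:: (0,0); (5,14); (1,7)]; [:: (4,13); (2,15); (1,30)]; [:: (2,13); (6,14); (4,18)]; [:: (0,26); (1,14); (3,2)]; [:: (6,0); (5,4); (7,6)]; [:: (2,26); (7,1); (6,16)]; [:: (0,13); (3,1); (7,2)]];
     [:: [:: (3,0); (5,21); (4,17)]; [:: (0,0); (5,8); (1,4)]; [:: (4,13); (2,3); (1,6)]; [:: (2,13); (6,8); (4,27)]; [:: (0,26); (1,8); (3,29)]; [:: (6,0); (5,19); (7,9)]; [:: (2,26); (7,34); (6,37)]; [:: (0,13); (3,34); (7,29)]];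
     [:: [:: (3,0); (5,12); (4,32)]; [:: (0,0); (5,38); (1,19)]; [:: (4,13); (2,24); (1,9)]; [:: (2,13); (6,38); (4,21)]; [:: (0,26); (1,38); (3,11)]; [:: (6,0); (5,22); (7,33)]; [:: (2,26); (7,25); (6,10)]; [:: (0,13); (3,25); (7,11)]];
     [:: [:: (3,0); (5,18); (4,35)]; [:: (0,0); (5,5); (1,22)]; [:: (4,13); (2,36); (1,33)]; [:: (2,13); (6,5); (4,12)]; [:: (0,26); (1,5); (3,23)]; [:: (6,0); (5,7); (7,30)]; [:: (2,26); (7,31); (6,28)]; [:: (0,13); (3,31); (7,23)]];
     [:: [:: (4,0); (6,27); (5,20)]; [:: (1,0); (6,14); (2,4)]; [:: (5,13); (3,15); (2,30)]; [:: (3,13); (0,2); (5,18)]; [:: (1,26); (2,17); (4,2)]; [:: (0,0); (6,1); (7,3)]; [:: (3,26); (7,1); (0,31)]; [:: (1,13); (4,1); (7,5)]];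
     [:: [:: (4,0); (6,21); (5,17)]; [:: (1,0); (6,8); (2,19)]; [:: (5,13); (3,3); (2,6)]; [:: (3,13); (0,29); (5,27)]; [:: (1,26); (2,32); (4,29)]; [:: (0,0); (6,34); (7,24)]; [:: (3,26); (7,34); (0,1)]; [:: (1,13); (4,34); (7,14)]];
     [:: [:: (4,0); (6,12); (5,32)]; [:: (1,0); (6,38); (2,22)]; [:: (5,13); (3,24); (2,9)]; [:: (3,13); (0,11); (5,21)]; [:: (1,26); (2,35); (4,11)]; [:: (0,0); (6,25); (7,36)]; [:: (3,26); (7,25); (0,34)]; [:: (1,13); (4,25); (7,8)]];
     [:: [:: (4,0); (6,18); (5,35)]; [:: (1,0); (6,5); (2,7)]; [:: (5,13); (3,36); (2,33)]; [:: (3,13); (0,23); (5,12)]; [:: (1,26); (2,20); (4,23)]; [:: (0,0); (6,31); (7,15)]; [:: (3,26); (7,31); (0,25)]; [:: (1,13); (4,31); (7,38)]];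
     [:: [:: (5,0); (0,27); (6,5)]; [:: (2,0); (0,14); (3,31)]; [:: (6,13); (4,27); (3,18)]; [:: (4,13); (1,17); (6,27)]; [:: (2,26); (3,14); (5,17)]; [:: (1,0); (0,28); (7,27)]; [:: (4,26); (7,1); (1,16)]; [:: (2,13); (5,1); (7,20)]];
     [:: [:: (5,0); (0,21); (6,14)]; [:: (2,0); (0,8); (3,1)]; [:: (6,13); (4,21); (3,27)]; [:: (4,13); (1,32); (6,21)]; [:: (2,26); (3,8); (5,32)]; [:: (1,0); (0,16); (7,21)]; [:: (4,26); (7,34); (1,37)]; [:: (2,13); (5,34); (7,17)]];
     [:: [:: (5,0); (0,12); (6,8)]; [:: (2,0); (0,38); (3,34)]; [:: (6,13); (4,12); (3,21)]; [:: (4,13); (1,35); (6,12)]; [:: (2,26); (3,38); (5,35)]; [:: (1,0); (0,37); (7,12)]; [:: (4,26); (7,25); (1,10)]; [:: (2,13); (5,25); (7,32)]];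
     [:: [:: (5,0); (0,18); (6,38)]; [:: (2,0); (0,5); (3,25)]; [:: (6,13); (4,18); (3,12)]; [:: (4,13); (1,20); (6,18)]; [:: (2,26); (3,5); (5,20)]; [:: (1,0); (0,10); (7,18)]; [:: (4,26); (7,31); (1,28)]; [:: (2,13); (5,31); (7,35)]];
     [:: [:: (6,0); (1,27); (0,29)]; [:: (3,0); (1,17); (4,1)]; [:: (0,13); (5,15); (4,21)]; [:: (5,13); (2,14); (0,30)]; [:: (3,26); (4,14); (6,29)]; [:: (2,0); (1,28); (7,30)]; [:: (5,26); (7,4); (2,16)]; [:: (3,13); (6,1); (7,20)]];
     [:: [:: (6,0); (1,21); (0,11)]; [:: (3,0); (1,32); (4,34)]; [:: (0,13); (5,3); (4,12)]; [:: (5,13); (2,8); (0,6)]; [:: (3,26); (4,8); (6,11)]; [:: (2,0); (1,16); (7,6)]; [:: (5,26); (7,19); (2,37)]; [:: (3,13); (6,34); (7,17)]];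
     [:: [:: (6,0); (1,12); (0,23)]; [:: (3,0); (1,35); (4,25)]; [:: (0,13); (5,24); (4,18)]; [:: (5,13); (2,38); (0,9)]; [:: (3,26); (4,38); (6,23)]; [:: (2,0); (1,37); (7,9)]; [:: (5,26); (7,22); (2,10)]; [:: (3,13); (6,25); (7,32)]];
     [:: [:: (6,0); (1,18); (0,2)]; [:: (3,0); (1,20); (4,31)]; [:: (0,13); (5,36); (4,27)]; [:: (5,13); (2,5); (0,33)]; [:: (3,26); (4,5); (6,2)]; [:: (2,0); (1,10); (7,33)]; [:: (5,26); (7,7); (2,28)]; [:: (3,13); (6,31); (7,35)]];
     [:: [:: (0,0); (2,27); (1,17)]; [:: (4,0); (2,17); (5,1)]; [:: (1,13); (6,15); (5,30)]; [:: (6,13); (3,14); (1,6)]; [:: (4,26); (5,14); (0,17)]; [:: (3,0); (2,1); (7,30)]; [:: (6,26); (7,1); (3,19)]; [:: (4,13); (0,28); (7,14)]];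
     [:: [:: (0,0); (2,21); (1,32)]; [:: (4,0); (2,32); (5,34)]; [:: (1,13); (6,3); (5,6)]; [:: (6,13); (3,8); (1,9)]; [:: (4,26); (5,8); (0,32)]; [:: (3,0); (2,34); (7,6)]; [:: (6,26); (7,34); (3,22)]; [:: (4,13); (0,16); (7,8)]];
     [:: [:: (0,0); (2,12); (1,35)]; [:: (4,0); (2,35); (5,25)]; [:: (1,13); (6,24); (5,9)]; [:: (6,13); (3,38); (1,33)]; [:: (4,26); (5,38); (0,35)]; [:: (3,0); (2,25); (7,9)]; [:: (6,26); (7,25); (3,7)]; [:: (4,13); (0,37); (7,38)]];
     [:: [:: (0,0); (2,18); (1,20)]; [:: (4,0); (2,20); (5,31)]; [:: (1,13); (6,36); (5,33)]; [:: (6,13); (3,5); (1,30)]; [:: (4,26); (5,5); (0,20)]; [:: (3,0); (2,31); (7,33)]; [:: (6,26); (7,31); (3,4)]; [:: (4,13); (0,10); (7,5)]];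
     [:: [:: (1,0); (3,15); (2,17)]; [:: (5,0); (3,14); (6,31)]; [:: (2,13); (0,15); (6,6)]; [:: (0,13); (4,17); (2,27)]; [:: (5,26); (6,17); (1,8)]; [:: (4,0); (3,1); (7,18)]; [:: (0,26); (7,28); (4,4)]; [:: (5,13); (1,4); (7,8)]];
     [:: [:: (1,0); (3,3); (2,32)]; [:: (5,0); (3,8); (6,1)]; [:: (2,13); (0,3); (6,9)]; [:: (0,13); (4,32); (2,21)]; [:: (5,26); (6,32); (1,38)]; [:: (4,0); (3,34); (7,27)]; [:: (0,26); (7,16); (4,19)]; [:: (5,13); (1,19); (7,38)]];
     [:: [:: (1,0); (3,24); (2,35)]; [:: (5,0); (3,38); (6,34)]; [:: (2,13); (0,24); (6,33)]; [:: (0,13); (4,35); (2,12)]; [:: (5,26); (6,35); (1,5)]; [:: (4,0); (3,25); (7,21)]; [:: (0,26); (7,37); (4,22)]; [:: (5,13); (1,22); (7,5)]];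
     [:: [:: (1,0); (3,36); (2,20)]; [:: (5,0); (3,5); (6,25)]; [:: (2,13); (0,36); (6,30)]; [:: (0,13); (4,20); (2,18)]; [:: (5,26); (6,20); (1,14)]; [:: (4,0); (3,31); (7,12)]; [:: (0,26); (7,10); (4,7)]; [:: (5,13); (1,7); (7,14)]];
     [:: [:: (2,0); (4,27); (3,17)]; [:: (6,0); (4,2); (0,1)]; [:: (3,13); (1,27); (0,3)]; [:: (1,13); (5,14); (3,30)]; [:: (6,26); (0,2); (2,17)]; [:: (5,0); (4,1); (7,18)]; [:: (1,26); (7,1); (5,31)]; [:: (6,13); (2,28); (7,14)]];
     [:: [:: (2,0); (4,21); (3,32)]; [:: (6,0); (4,29); (0,34)]; [:: (3,13); (1,21); (0,24)]; [:: (1,13); (5,8); (3,6)]; [:: (6,26); (0,29); (2,32)]; [:: (5,0); (4,34); (7,27)]; [:: (1,26); (7,34); (5,1)]; [:: (6,13); (2,16); (7,8)]];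
     [:: [:: (2,0); (4,12); (3,35)]; [:: (6,0); (4,11); (0,25)]; [:: (3,13); (1,12); (0,36)]; [:: (1,13); (5,38); (3,9)]; [:: (6,26); (0,11); (2,35)]; [:: (5,0); (4,25); (7,21)]; [:: (1,26); (7,25); (5,34)]; [:: (6,13); (2,37); (7,38)]];
     [:: [:: (2,0); (4,18); (3,20)]; [:: (6,0); (4,23); (0,31)]; [:: (3,13); (1,18); (0,15)]; [:: (1,13); (5,5); (3,33)]; [:: (6,26); (0,23); (2,20)]; [:: (5,0); (4,31); (7,12)]; [:: (1,26); (7,31); (5,25)]; [:: (6,13); (2,10); (7,5)]];
     [:: [:: (0,0); (1,30); (6,27)]; [:: (0,26); (1,1); (3,30)]; [:: (2,0); (3,2); (4,6)]; [:: (2,26); (5,4); (7,2)]; [:: (1,26); (5,15); (6,4)]; [:: (2,13); (4,14); (7,30)]; [:: (0,13); (3,4); (4,1)]; [:: (5,26); (6,14); (7,31)]];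
     [:: [:: (0,0); (1,6); (6,21)]; [:: (0,26); (1,34); (3,6)]; [:: (2,0); (3,29); (4,9)]; [:: (2,26); (5,19); (7,29)]; [:: (1,26); (5,3); (6,19)]; [:: (2,13); (4,8); (7,6)]; [:: (0,13); (3,19); (4,34)]; [:: (5,26); (6,8); (7,1)]];
     [:: [:: (0,0); (1,9); (6,12)]; [:: (0,26); (1,25); (3,9)]; [:: (2,0); (3,11); (4,33)]; [:: (2,26); (5,22); (7,11)]; [:: (1,26); (5,24); (6,22)]; [:: (2,13); (4,38); (7,9)]; [:: (0,13); (3,22); (4,25)]; [:: (5,26); (6,38); (7,34)]];
     [:: [:: (0,0); (1,33); (6,18)]; [:: (0,26); (1,31); (3,33)]; [:: (2,0); (3,23); (4,30)]; [:: (2,26); (5,7); (7,23)]; [:: (1,26); (5,36); (6,7)]; [:: (2,13); (4,5); (7,33)]; [:: (0,13); (3,7); (4,31)]; [:: (5,26); (6,5); (7,25)]];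
     [:: [:: (1,0); (2,27); (6,31)]; [:: (1,26); (2,1); (4,18)]; [:: (0,0); (4,2); (5,30)]; [:: (0,26); (3,1); (7,4)]; [:: (2,26); (3,30); (6,14)]; [:: (0,13); (5,14); (7,17)]; [:: (1,13); (4,4); (5,28)]; [:: (3,26); (6,15); (7,3)]];
     [:: [:: (1,0); (2,21); (6,1)]; [:: (1,26); (2,34); (4,27)]; [:: (0,0); (4,29); (5,6)]; [:: (0,26); (3,34); (7,19)]; [:: (2,26); (3,6); (6,8)]; [:: (0,13); (5,8); (7,32)]; [:: (1,13); (4,19); (5,16)]; [:: (3,26); (6,3); (7,24)]];
     [:: [:: (1,0); (2,12); (6,34)]; [:: (1,26); (2,25); (4,21)]; [:: (0,0); (4,11); (5,9)]; [:: (0,26); (3,25); (7,22)]; [:: (2,26); (3,9); (6,38)]; [:: (0,13); (5,38); (7,35)]; [:: (1,13); (4,22); (5,37)]; [:: (3,26); (6,24); (7,36)]];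
     [:: [:: (1,0); (2,18); (6,25)]; [:: (1,26); (2,31); (4,12)]; [:: (0,0); (4,23); (5,33)]; [:: (0,26); (3,31); (7,7)]; [:: (2,26); (3,33); (6,5)]; [:: (0,13); (5,5); (7,20)]; [:: (1,13); (4,7); (5,10)]; [:: (3,26); (6,36); (7,15)]];
     [:: [:: (2,0); (0,30); (6,14)]; [:: (2,26); (0,4); (5,21)]; [:: (1,0); (5,2); (3,6)]; [:: (1,26); (4,1); (7,3)]; [:: (0,26); (4,15); (6,6)]; [:: (1,13); (3,2); (7,4)]; [:: (2,13); (5,28); (3,19)]; [:: (4,26); (6,28); (7,17)]];
     [:: [:: (2,0); (0,6); (6,8)]; [:: (2,26); (0,19); (5,12)]; [:: (1,0); (5,29); (3,9)]; [:: (1,26); (4,34); (7,24)]; [:: (0,26); (4,3); (6,9)]; [:: (1,13); (3,29); (7,19)]; [:: (2,13); (5,16); (3,22)]; [:: (4,26); (6,16); (7,32)]];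
     [:: [:: (2,0); (0,9); (6,38)]; [:: (2,26); (0,22); (5,18)]; [:: (1,0); (5,11); (3,33)]; [:: (1,26); (4,25); (7,36)]; [:: (0,26); (4,24); (6,33)]; [:: (1,13); (3,11); (7,22)]; [:: (2,13); (5,37); (3,7)]; [:: (4,26); (6,37); (7,35)]];
     [:: [:: (2,0); (0,33); (6,5)]; [:: (2,26); (0,7); (5,27)]; [:: (1,0); (5,23); (3,30)]; [:: (1,26); (4,31); (7,15)]; [:: (0,26); (4,36); (6,30)]; [:: (1,13); (3,23); (7,7)]; [:: (2,13); (5,10); (3,4)]; [:: (4,26); (6,10); (7,20)]];
     [:: [:: (5,0); (7,26); (4,26)]; [:: (0,13); (3,0); (6,26)]; [:: (6,0); (5,26); (3,26)]; [:: (0,0); (1,26); (4,13)]; [:: (4,0); (7,13); (3,13)]; [:: (2,0); (6,13); (1,13)]; [:: (1,0); (2,13); (5,13)]; [:: (2,26); (7,0); (0,26)]]].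

Definition quads41 : seq (seq (nat * nat)) :=
  [:: [:: (0,0); (1,1); (2,32); (7,21)];
     [:: (0,0); (1,34); (2,35); (7,12)];
     [:: (0,0); (1,25); (2,20); (7,18)];
     [:: (0,0); (1,31); (2,17); (7,27)];
     [:: (3,0); (4,2); (5,4); (6,6)];
     [:: (3,0); (4,29); (5,19); (6,9)];
     [:: (3,0); (4,11); (5,22); (6,33)];
     [:: (3,0); (4,23); (5,7); (6,30)];
     [:: (0,0); (1,13); (3,0); (7,26)];
     [:: (0,0); (4,26); (5,13); (6,0)];
     [:: (1,0); (4,13); (6,13); (7,0)];
     [:: (1,0); (2,0); (3,0); (4,0)];
     [:: (0,0); (1,0); (3,13); (5,0)];
     [:: (0,0); (2,13); (5,26); (7,0)];
     [:: (0,0); (2,26); (4,0); (6,26)];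
     [:: (1,0); (5,26); (6,26); (7,26)];
     [:: (2,0); (3,13); (4,26); (5,26)];
     [:: (2,0); (3,26); (6,26); (7,0)]].

Definition classes42 : seq (seq (seq (nat * nat))) :=
  [:: [:: [:: (3,0); (5,27); (4,32)]; [:: (0,0); (5,14); (1,28)]; [:: (4,13); (2,15); (1,18)]; [:: (2,13); (6,2); (4,18)]; [:: (0,26); (1,14); (3,2)]; [:: (6,0); (5,28); (7,18)]; [:: (2,26); (7,28); (6,31)]; [:: (0,13); (3,1); (7,2)]];
     [:: [:: (3,0); (5,30); (4,11)]; [:: (0,0); (5,17); (1,34)]; [:: (4,13); (2,21); (1,33)]; [:: (2,13); (6,8); (4,33)]; [:: (0,26); (1,17); (3,8)]; [:: (6,0); (5,34); (7,33)]; [:: (2,26); (7,34); (6,7)]; [:: (0,13); (3,4); (7,8)]];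
     [:: [:: (3,0); (5,3); (4,5)]; [:: (0,0); (5,29); (1,19)]; [:: (4,13); (2,6); (1,15)]; [:: (2,13); (6,32); (4,15)]; [:: (0,26); (1,29); (3,32)]; [:: (6,0); (5,19); (7,15)]; [:: (2,26); (7,19); (6,28)]; [:: (0,13); (3,16); (7,32)]];
     [:: [:: (3,0); (5,12); (4,20)]; [:: (0,0); (5,38); (1,37)]; [:: (4,13); (2,24); (1,21)]; [:: (2,13); (6,11); (4,21)]; [:: (0,26); (1,38); (3,11)]; [:: (6,0); (5,37); (7,21)]; [:: (2,26); (7,37); (6,34)]; [:: (0,13); (3,25); (7,11)]];
     [:: [:: (3,0); (5,9); (4,2)]; [:: (0,0); (5,35); (1,31)]; [:: (4,13); (2,18); (1,6)]; [:: (2,13); (6,5); (4,6)]; [:: (0,26); (1,35); (3,5)]; [:: (6,0); (5,31); (7,6)]; [:: (2,26); (7,31); (6,19)]; [:: (0,13); (3,22); (7,5)]];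
     [:: [:: (3,0); (5,36); (4,8)]; [:: (0,0); (5,23); (1,7)]; [:: (4,13); (2,33); (1,24)]; [:: (2,13); (6,20); (4,24)]; [:: (0,26); (1,23); (3,20)]; [:: (6,0); (5,7); (7,24)]; [:: (2,26); (7,7); (6,37)]; [:: (0,13); (3,10); (7,20)]];
     [:: [:: (4,0); (6,15); (5,17)]; [:: (1,0); (6,2); (2,31)]; [:: (5,13); (3,27); (2,6)]; [:: (3,13); (0,14); (5,6)]; [:: (1,26); (2,2); (4,5)]; [:: (0,0); (6,1); (7,15)]; [:: (3,26); (7,1); (0,28)]; [:: (1,13); (4,1); (7,29)]];
     [:: [:: (4,0); (6,21); (5,29)]; [:: (1,0); (6,8); (2,7)]; [:: (5,13); (3,30); (2,24)]; [:: (3,13); (0,17); (5,24)]; [:: (1,26); (2,8); (4,20)]; [:: (0,0); (6,4); (7,21)]; [:: (3,26); (7,4); (0,34)]; [:: (1,13); (4,4); (7,38)]];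
     [:: [:: (4,0); (6,6); (5,38)]; [:: (1,0); (6,32); (2,28)]; [:: (5,13); (3,3); (2,18)]; [:: (3,13); (0,29); (5,18)]; [:: (1,26); (2,32); (4,2)]; [:: (0,0); (6,16); (7,6)]; [:: (3,26); (7,16); (0,19)]; [:: (1,13); (4,16); (7,35)]];
     [:: [:: (4,0); (6,24); (5,35)]; [:: (1,0); (6,11); (2,34)]; [:: (5,13); (3,12); (2,33)]; [:: (3,13); (0,38); (5,33)]; [:: (1,26); (2,11); (4,8)]; [:: (0,0); (6,25); (7,24)]; [:: (3,26); (7,25); (0,37)]; [:: (1,13); (4,25); (7,23)]];
     [:: [:: (4,0); (6,18); (5,23)]; [:: (1,0); (6,5); (2,19)]; [:: (5,13); (3,9); (2,15)]; [:: (3,13); (0,35); (5,15)]; [:: (1,26); (2,5); (4,32)]; [:: (0,0); (6,22); (7,18)]; [:: (3,26); (7,22); (0,31)]; [:: (1,13); (4,22); (7,14)]];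
     [:: [:: (4,0); (6,33); (5,14)]; [:: (1,0); (6,20); (2,37)]; [:: (5,13); (3,36); (2,21)]; [:: (3,13); (0,23); (5,21)]; [:: (1,26); (2,20); (4,11)]; [:: (0,0); (6,10); (7,33)]; [:: (3,26); (7,10); (0,7)]; [:: (1,13); (4,10); (7,17)]];
     [:: [:: (5,0); (0,15); (6,14)]; [:: (2,0); (0,14); (3,19)]; [:: (6,13); (4,15); (3,18)]; [:: (4,13); (1,2); (6,18)]; [:: (2,26); (3,14); (5,32)]; [:: (1,0); (0,28); (7,30)]; [:: (4,26); (7,1); (1,16)]; [:: (2,13); (5,1); (7,32)]];
     [:: [:: (5,0); (0,21); (6,17)]; [:: (2,0); (0,17); (3,37)]; [:: (6,13); (4,21); (3,33)]; [:: (4,13); (1,8); (6,33)]; [:: (2,26); (3,17); (5,11)]; [:: (1,0); (0,34); (7,3)]; [:: (4,26); (7,4); (1,25)]; [:: (2,13); (5,4); (7,11)]];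
     [:: [:: (5,0); (0,6); (6,29)]; [:: (2,0); (0,29); (3,31)]; [:: (6,13); (4,6); (3,15)]; [:: (4,13); (1,32); (6,15)]; [:: (2,26); (3,29); (5,5)]; [:: (1,0); (0,19); (7,12)]; [:: (4,26); (7,16); (1,22)]; [:: (2,13); (5,16); (7,5)]];
     [:: [:: (5,0); (0,24); (6,38)]; [:: (2,0); (0,38); (3,7)]; [:: (6,13); (4,24); (3,21)]; [:: (4,13); (1,11); (6,21)]; [:: (2,26); (3,38); (5,20)]; [:: (1,0); (0,37); (7,9)]; [:: (4,26); (7,25); (1,10)]; [:: (2,13); (5,25); (7,20)]];
     [:: [:: (5,0); (0,18); (6,35)]; [:: (2,0); (0,35); (3,28)]; [:: (6,13); (4,18); (3,6)]; [:: (4,13); (1,5); (6,6)]; [:: (2,26); (3,35); (5,2)]; [:: (1,0); (0,31); (7,36)]; [:: (4,26); (7,22); (1,1)]; [:: (2,13); (5,22); (7,2)]];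
     [:: [:: (5,0); (0,33); (6,23)]; [:: (2,0); (0,23); (3,34)]; [:: (6,13); (4,33); (3,24)]; [:: (4,13); (1,20); (6,24)]; [:: (2,26); (3,23); (5,8)]; [:: (1,0); (0,7); (7,27)]; [:: (4,26); (7,10); (1,4)]; [:: (2,13); (5,10); (7,8)]];
     [:: [:: (6,0); (1,27); (0,2)]; [:: (3,0); (1,2); (4,1)]; [:: (0,13); (5,15); (4,27)]; [:: (5,13); (2,14); (0,3)]; [:: (3,26); (4,2); (6,5)]; [:: (2,0); (1,28); (7,30)]; [:: (5,26); (7,28); (2,4)]; [:: (3,13); (6,1); (7,2)]];
     [:: [:: (6,0); (1,30); (0,8)]; [:: (3,0); (1,8); (4,4)]; [:: (0,13); (5,21); (4,30)]; [:: (5,13); (2,17); (0,12)]; [:: (3,26); (4,8); (6,20)]; [:: (2,0); (1,34); (7,3)]; [:: (5,26); (7,34); (2,16)]; [:: (3,13); (6,4); (7,8)]];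
     [:: [:: (6,0); (1,3); (0,32)]; [:: (3,0); (1,32); (4,16)]; [:: (0,13); (5,6); (4,3)]; [:: (5,13); (2,29); (0,9)]; [:: (3,26); (4,32); (6,2)]; [:: (2,0); (1,19); (7,12)]; [:: (5,26); (7,19); (2,25)]; [:: (3,13); (6,16); (7,32)]];
     [:: [:: (6,0); (1,12); (0,11)]; [:: (3,0); (1,11); (4,25)]; [:: (0,13); (5,24); (4,12)]; [:: (5,13); (2,38); (0,36)]; [:: (3,26); (4,11); (6,8)]; [:: (2,0); (1,37); (7,9)]; [:: (5,26); (7,37); (2,22)]; [:: (3,13); (6,25); (7,11)]];
     [:: [:: (6,0); (1,9); (0,5)]; [:: (3,0); (1,5); (4,22)]; [:: (0,13); (5,18); (4,9)]; [:: (5,13); (2,35); (0,27)]; [:: (3,26); (4,5); (6,32)]; [:: (2,0); (1,31); (7,36)]; [:: (5,26); (7,31); (2,10)]; [:: (3,13); (6,22); (7,5)]];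
     [:: [:: (6,0); (1,36); (0,20)]; [:: (3,0); (1,20); (4,10)]; [:: (0,13); (5,33); (4,36)]; [:: (5,13); (2,23); (0,30)]; [:: (3,26); (4,20); (6,11)]; [:: (2,0); (1,7); (7,27)]; [:: (5,26); (7,7); (2,1)]; [:: (3,13); (6,10); (7,20)]];
     [:: [:: (0,0); (2,15); (1,14)]; [:: (4,0); (2,14); (5,16)]; [:: (1,13); (6,27); (5,3)]; [:: (6,13); (3,14); (1,6)]; [:: (4,26); (5,2); (0,14)]; [:: (3,0); (2,28); (7,18)]; [:: (6,26); (7,28); (3,1)]; [:: (4,13); (0,28); (7,14)]];
     [:: [:: (0,0); (2,21); (1,17)]; [:: (4,0); (2,17); (5,25)]; [:: (1,13); (6,30); (5,12)]; [:: (6,13); (3,17); (1,24)]; [:: (4,26); (5,8); (0,17)]; [:: (3,0); (2,34); (7,33)]; [:: (6,26); (7,34); (3,4)]; [:: (4,13); (0,34); (7,17)]];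
     [:: [:: (0,0); (2,6); (1,29)]; [:: (4,0); (2,29); (5,22)]; [:: (1,13); (6,3); (5,9)]; [:: (6,13); (3,29); (1,18)]; [:: (4,26); (5,32); (0,29)]; [:: (3,0); (2,19); (7,15)]; [:: (6,26); (7,19); (3,16)]; [:: (4,13); (0,19); (7,29)]];
     [:: [:: (0,0); (2,24); (1,38)]; [:: (4,0); (2,38); (5,10)]; [:: (1,13); (6,12); (5,36)]; [:: (6,13); (3,38); (1,33)]; [:: (4,26); (5,11); (0,38)]; [:: (3,0); (2,37); (7,21)]; [:: (6,26); (7,37); (3,25)]; [:: (4,13); (0,37); (7,38)]];
     [:: [:: (0,0); (2,18); (1,35)]; [:: (4,0); (2,35); (5,1)]; [:: (1,13); (6,9); (5,27)]; [:: (6,13); (3,35); (1,15)]; [:: (4,26); (5,5); (0,35)]; [:: (3,0); (2,31); (7,6)]; [:: (6,26); (7,31); (3,22)]; [:: (4,13); (0,31); (7,35)]];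
     [:: [:: (0,0); (2,33); (1,23)]; [:: (4,0); (2,23); (5,4)]; [:: (1,13); (6,36); (5,30)]; [:: (6,13); (3,23); (1,21)]; [:: (4,26); (5,20); (0,23)]; [:: (3,0); (2,7); (7,24)]; [:: (6,26); (7,7); (3,10)]; [:: (4,13); (0,7); (7,23)]];
     [:: [:: (1,0); (3,15); (2,14)]; [:: (5,0); (3,2); (6,4)]; [:: (2,13); (0,15); (6,27)]; [:: (0,13); (4,2); (2,27)]; [:: (5,26); (6,14); (1,32)]; [:: (4,0); (3,1); (7,6)]; [:: (0,26); (7,1); (4,28)]; [:: (5,13); (1,1); (7,29)]];
     [:: [:: (1,0); (3,21); (2,17)]; [:: (5,0); (3,8); (6,16)]; [:: (2,13); (0,21); (6,30)]; [:: (0,13); (4,8); (2,30)]; [:: (5,26); (6,17); (1,11)]; [:: (4,0); (3,4); (7,24)]; [:: (0,26); (7,4); (4,34)]; [:: (5,13); (1,4); (7,38)]];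
     [:: [:: (1,0); (3,6); (2,29)]; [:: (5,0); (3,32); (6,25)]; [:: (2,13); (0,6); (6,3)]; [:: (0,13); (4,32); (2,3)]; [:: (5,26); (6,29); (1,5)]; [:: (4,0); (3,16); (7,18)]; [:: (0,26); (7,16); (4,19)]; [:: (5,13); (1,16); (7,35)]];
     [:: [:: (1,0); (3,24); (2,38)]; [:: (5,0); (3,11); (6,22)]; [:: (2,13); (0,24); (6,12)]; [:: (0,13); (4,11); (2,12)]; [:: (5,26); (6,38); (1,20)]; [:: (4,0); (3,25); (7,33)]; [:: (0,26); (7,25); (4,37)]; [:: (5,13); (1,25); (7,23)]];
     [:: [:: (1,0); (3,18); (2,35)]; [:: (5,0); (3,5); (6,10)]; [:: (2,13); (0,18); (6,9)]; [:: (0,13); (4,5); (2,9)]; [:: (5,26); (6,35); (1,2)]; [:: (4,0); (3,22); (7,15)]; [:: (0,26); (7,22); (4,31)]; [:: (5,13); (1,22); (7,14)]];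
     [:: [:: (1,0); (3,33); (2,23)]; [:: (5,0); (3,20); (6,1)]; [:: (2,13); (0,33); (6,36)]; [:: (0,13); (4,20); (2,36)]; [:: (5,26); (6,23); (1,8)]; [:: (4,0); (3,10); (7,21)]; [:: (0,26); (7,10); (4,7)]; [:: (5,13); (1,10); (7,17)]];
     [:: [:: (2,0); (4,15); (3,17)]; [:: (6,0); (4,14); (0,28)]; [:: (3,13); (1,27); (0,3)]; [:: (1,13); (5,2); (3,27)]; [:: (6,26); (0,2); (2,5)]; [:: (5,0); (4,28); (7,30)]; [:: (1,26); (7,1); (5,19)]; [:: (6,13); (2,1); (7,2)]];
     [:: [:: (2,0); (4,21); (3,29)]; [:: (6,0); (4,17); (0,34)]; [:: (3,13); (1,30); (0,12)]; [:: (1,13); (5,8); (3,30)]; [:: (6,26); (0,8); (2,20)]; [:: (5,0); (4,34); (7,3)]; [:: (1,26); (7,4); (5,37)]; [:: (6,13); (2,4); (7,8)]];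
     [:: [:: (2,0); (4,6); (3,38)]; [:: (6,0); (4,29); (0,19)]; [:: (3,13); (1,3); (0,9)]; [:: (1,13); (5,32); (3,3)]; [:: (6,26); (0,32); (2,2)]; [:: (5,0); (4,19); (7,12)]; [:: (1,26); (7,16); (5,31)]; [:: (6,13); (2,16); (7,32)]];
     [:: [:: (2,0); (4,24); (3,35)]; [:: (6,0); (4,38); (0,37)]; [:: (3,13); (1,12); (0,36)]; [:: (1,13); (5,11); (3,12)]; [:: (6,26); (0,11); (2,8)]; [:: (5,0); (4,37); (7,9)]; [:: (1,26); (7,25); (5,7)]; [:: (6,13); (2,25); (7,11)]];
     [:: [:: (2,0); (4,18); (3,23)]; [:: (6,0); (4,35); (0,31)]; [:: (3,13); (1,9); (0,27)]; [:: (1,13); (5,5); (3,9)]; [:: (6,26); (0,5); (2,32)]; [:: (5,0); (4,31); (7,36)]; [:: (1,26); (7,22); (5,28)]; [:: (6,13); (2,22); (7,5)]];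
     [:: [:: (2,0); (4,33); (3,14)]; [:: (6,0); (4,23); (0,7)]; [:: (3,13); (1,36); (0,30)]; [:: (1,13); (5,20); (3,36)]; [:: (6,26); (0,20); (2,11)]; [:: (5,0); (4,7); (7,27)]; [:: (1,26); (7,10); (5,34)]; [:: (6,13); (2,10); (7,20)]]].

Definition quads42 : seq (seq (nat * nat)) :=
  [:: [:: (0,0); (1,0); (2,0); (3,0)];
     [:: (0,0); (1,13); (2,26); (4,0)];
     [:: (0,0); (1,26); (5,0); (6,0)];
     [:: (0,0); (3,13); (4,26); (5,13)];
     [:: (0,0); (4,13); (5,26); (7,0)];
     [:: (0,0); (3,26); (6,13); (7,26)];
     [:: (0,0); (2,13); (6,26); (7,13)];
     [:: (1,0); (2,26); (5,26); (7,13)];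
     [:: (2,0); (3,13); (4,0); (6,26)];
     [:: (1,0); (4,0); (6,0); (7,0)];
     [:: (1,0); (3,13); (4,13); (7,26)];
     [:: (1,0); (3,26); (5,0); (6,26)];
     [:: (2,0); (3,26); (5,13); (7,13)];
     [:: (2,0); (4,26); (5,26); (6,0)]].

Definition classes43 : seq (seq (seq (nat * nat))) :=
  [:: [:: [:: (3,0); (5,27); (4,32)]; [:: (0,0); (5,14); (1,28)]; [:: (4,13); (2,15); (1,18)]; [:: (2,13); (6,2); (4,18)]; [:: (0,26); (1,14); (3,2)]; [:: (6,0); (5,28); (7,18)]; [:: (2,26); (7,28); (6,31)]; [:: (0,13); (3,1); (7,2)]];
     [:: [:: (3,0); (5,30); (4,11)]; [:: (0,0); (5,17); (1,34)]; [:: (4,13); (2,21); (1,33)]; [:: (2,13); (6,8); (4,33)]; [:: (0,26); (1,17); (3,8)]; [:: (6,0); (5,34); (7,33)]; [:: (2,26); (7,34); (6,7)]; [:: (0,13); (3,4); (7,8)]];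
     [:: [:: (3,0); (5,3); (4,5)]; [:: (0,0); (5,29); (1,19)]; [:: (4,13); (2,6); (1,15)]; [:: (2,13); (6,32); (4,15)]; [:: (0,26); (1,29); (3,32)]; [:: (6,0); (5,19); (7,15)]; [:: (2,26); (7,19); (6,28)]; [:: (0,13); (3,16); (7,32)]];
     [:: [:: (3,0); (5,12); (4,20)]; [:: (0,0); (5,38); (1,37)]; [:: (4,13); (2,24); (1,21)]; [:: (2,13); (6,11); (4,21)]; [:: (0,26); (1,38); (3,11)]; [:: (6,0); (5,37); (7,21)]; [:: (2,26); (7,37); (6,34)]; [:: (0,13); (3,25); (7,11)]];
     [:: [:: (3,0); (5,9); (4,2)]; [:: (0,0); (5,35); (1,31)]; [:: (4,13); (2,18); (1,6)]; [:: (2,13); (6,5); (4,6)]; [:: (0,26); (1,35); (3,5)]; [:: (6,0); (5,31); (7,6)]; [:: (2,26); (7,31); (6,19)]; [:: (0,13); (3,22); (7,5)]];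
     [:: [:: (3,0); (5,36); (4,8)]; [:: (0,0); (5,23); (1,7)]; [:: (4,13); (2,33); (1,24)]; [:: (2,13); (6,20); (4,24)]; [:: (0,26); (1,23); (3,20)]; [:: (6,0); (5,7); (7,24)]; [:: (2,26); (7,7); (6,37)]; [:: (0,13); (3,10); (7,20)]];
     [:: [:: (4,0); (6,15); (5,17)]; [:: (1,0); (6,2); (2,31)]; [:: (5,13); (3,27); (2,6)]; [:: (3,13); (0,14); (5,6)]; [:: (1,26); (2,2); (4,5)]; [:: (0,0); (6,1); (7,15)]; [:: (3,26); (7,1); (0,28)]; [:: (1,13); (4,1); (7,29)]];
     [:: [:: (4,0); (6,21); (5,29)]; [:: (1,0); (6,8); (2,7)]; [:: (5,13); (3,30); (2,24)]; [:: (3,13); (0,17); (5,24)]; [:: (1,26); (2,8); (4,20)]; [:: (0,0); (6,4); (7,21)]; [:: (3,26); (7,4); (0,34)]; [:: (1,13); (4,4); (7,38)]];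
     [:: [:: (4,0); (6,6); (5,38)]; [:: (1,0); (6,32); (2,28)]; [:: (5,13); (3,3); (2,18)]; [:: (3,13); (0,29); (5,18)]; [:: (1,26); (2,32); (4,2)]; [:: (0,0); (6,16); (7,6)]; [:: (3,26); (7,16); (0,19)]; [:: (1,13); (4,16); (7,35)]];
     [:: [:: (4,0); (6,24); (5,35)]; [:: (1,0); (6,11); (2,34)]; [:: (5,13); (3,12); (2,33)]; [:: (3,13); (0,38); (5,33)]; [:: (1,26); (2,11); (4,8)]; [:: (0,0); (6,25); (7,24)]; [:: (3,26); (7,25); (0,37)]; [:: (1,13); (4,25); (7,23)]];
     [:: [:: (4,0); (6,18); (5,23)]; [:: (1,0); (6,5); (2,19)]; [:: (5,13); (3,9); (2,15)]; [:: (3,13); (0,35); (5,15)]; [:: (1,26); (2,5); (4,32)]; [:: (0,0); (6,22); (7,18)]; [:: (3,26); (7,22); (0,31)]; [:: (1,13); (4,22); (7,14)]];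
     [:: [:: (4,0); (6,33); (5,14)]; [:: (1,0); (6,20); (2,37)]; [:: (5,13); (3,36); (2,21)]; [:: (3,13); (0,23); (5,21)]; [:: (1,26); (2,20); (4,11)]; [:: (0,0); (6,10); (7,33)]; [:: (3,26); (7,10); (0,7)]; [:: (1,13); (4,10); (7,17)]];
     [:: [:: (5,0); (0,15); (6,14)]; [:: (2,0); (0,14); (3,19)]; [:: (6,13); (4,15); (3,18)]; [:: (4,13); (1,2); (6,18)]; [:: (2,26); (3,14); (5,32)]; [:: (1,0); (0,28); (7,30)]; [:: (4,26); (7,1); (1,16)]; [:: (2,13); (5,1); (7,32)]];
     [:: [:: (5,0); (0,21); (6,17)]; [:: (2,0); (0,17); (3,37)]; [:: (6,13); (4,21); (3,33)]; [:: (4,13); (1,8); (6,33)]; [:: (2,26); (3,17); (5,11)]; [:: (1,0); (0,34); (7,3)]; [:: (4,26); (7,4); (1,25)]; [:: (2,13); (5,4); (7,11)]];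
     [:: [:: (5,0); (0,6); (6,29)]; [:: (2,0); (0,29); (3,31)]; [:: (6,13); (4,6); (3,15)]; [:: (4,13); (1,32); (6,15)]; [:: (2,26); (3,29); (5,5)]; [:: (1,0); (0,19); (7,12)]; [:: (4,26); (7,16); (1,22)]; [:: (2,13); (5,16); (7,5)]];
     [:: [:: (5,0); (0,24); (6,38)]; [:: (2,0); (0,38); (3,7)]; [:: (6,13); (4,24); (3,21)]; [:: (4,13); (1,11); (6,21)]; [:: (2,26); (3,38); (5,20)]; [:: (1,0); (0,37); (7,9)]; [:: (4,26); (7,25); (1,10)]; [:: (2,13); (5,25); (7,20)]];
     [:: [:: (5,0); (0,18); (6,35)]; [:: (2,0); (0,35); (3,28)]; [:: (6,13); (4,18); (3,6)]; [:: (4,13); (1,5); (6,6)]; [:: (2,26); (3,35); (5,2)]; [:: (1,0); (0,31); (7,36)]; [:: (4,26); (7,22); (1,1)]; [:: (2,13); (5,22); (7,2)]];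
     [:: [:: (5,0); (0,33); (6,23)]; [:: (2,0); (0,23); (3,34)]; [:: (6,13); (4,33); (3,24)]; [:: (4,13); (1,20); (6,24)]; [:: (2,26); (3,23); (5,8)]; [:: (1,0); (0,7); (7,27)]; [:: (4,26); (7,10); (1,4)]; [:: (2,13); (5,10); (7,8)]];
     [:: [:: (6,0); (1,27); (0,2)]; [:: (3,0); (1,2); (4,1)]; [:: (0,13); (5,15); (4,27)]; [:: (5,13); (2,14); (0,3)]; [:: (3,26); (4,2); (6,5)]; [:: (2,0); (1,28); (7,30)]; [:: (5,26); (7,28); (2,4)]; [:: (3,13); (6,1); (7,2)]];
     [:: [:: (6,0); (1,30); (0,8)]; [:: (3,0); (1,8); (4,4)]; [:: (0,13); (5,21); (4,30)]; [:: (5,13); (2,17); (0,12)]; [:: (3,26); (4,8); (6,20)]; [:: (2,0); (1,34); (7,3)]; [:: (5,26); (7,34); (2,16)]; [:: (3,13); (6,4); (7,8)]];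
     [:: [:: (6,0); (1,3); (0,32)]; [:: (3,0); (1,32); (4,16)]; [:: (0,13); (5,6); (4,3)]; [:: (5,13); (2,29); (0,9)]; [:: (3,26); (4,32); (6,2)]; [:: (2,0); (1,19); (7,12)]; [:: (5,26); (7,19); (2,25)]; [:: (3,13); (6,16); (7,32)]];
     [:: [:: (6,0); (1,12); (0,11)]; [:: (3,0); (1,11); (4,25)]; [:: (0,13); (5,24); (4,12)]; [:: (5,13); (2,38); (0,36)]; [:: (3,26); (4,11); (6,8)]; [:: (2,0); (1,37); (7,9)]; [:: (5,26); (7,37); (2,22)]; [:: (3,13); (6,25); (7,11)]];
     [:: [:: (6,0); (1,9); (0,5)]; [:: (3,0); (1,5); (4,22)]; [:: (0,13); (5,18); (4,9)]; [:: (5,13); (2,35); (0,27)]; [:: (3,26); (4,5); (6,32)]; [:: (2,0); (1,31); (7,36)]; [:: (5,26); (7,31); (2,10)]; [:: (3,13); (6,22); (7,5)]];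
     [:: [:: (6,0); (1,36); (0,20)]; [:: (3,0); (1,20); (4,10)]; [:: (0,13); (5,33); (4,36)]; [:: (5,13); (2,23); (0,30)]; [:: (3,26); (4,20); (6,11)]; [:: (2,0); (1,7); (7,27)]; [:: (5,26); (7,7); (2,1)]; [:: (3,13); (6,10); (7,20)]];
     [:: [:: (0,0); (2,15); (1,14)]; [:: (4,0); (2,14); (5,16)]; [:: (1,13); (6,27); (5,3)]; [:: (6,13); (3,14); (1,6)]; [:: (4,26); (5,2); (0,14)]; [:: (3,0); (2,28); (7,18)]; [:: (6,26); (7,28); (3,1)]; [:: (4,13); (0,28); (7,14)]];
     [:: [:: (0,0); (2,21); (1,17)]; [:: (4,0); (2,17); (5,25)]; [:: (1,13); (6,30); (5,12)]; [:: (6,13); (3,17); (1,24)]; [:: (4,26); (5,8); (0,17)]; [:: (3,0); (2,34); (7,33)]; [:: (6,26); (7,34); (3,4)]; [:: (4,13); (0,34); (7,17)]];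
     [:: [:: (0,0); (2,6); (1,29)]; [:: (4,0); (2,29); (5,22)]; [:: (1,13); (6,3); (5,9)]; [:: (6,13); (3,29); (1,18)]; [:: (4,26); (5,32); (0,29)]; [:: (3,0); (2,19); (7,15)]; [:: (6,26); (7,19); (3,16)]; [:: (4,13); (0,19); (7,29)]];
     [:: [:: (0,0); (2,24); (1,38)]; [:: (4,0); (2,38); (5,10)]; [:: (1,13); (6,12); (5,36)]; [:: (6,13); (3,38); (1,33)]; [:: (4,26); (5,11); (0,38)]; [:: (3,0); (2,37); (7,21)]; [:: (6,26); (7,37); (3,25)]; [:: (4,13); (0,37); (7,38)]];
     [:: [:: (0,0); (2,18); (1,35)]; [:: (4,0); (2,35); (5,1)]; [:: (1,13); (6,9); (5,27)]; [:: (6,13); (3,35); (1,15)]; [:: (4,26); (5,5); (0,35)]; [:: (3,0); (2,31); (7,6)]; [:: (6,26); (7,31); (3,22)]; [:: (4,13); (0,31); (7,35)]];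
     [:: [:: (0,0); (2,33); (1,23)]; [:: (4,0); (2,23); (5,4)]; [:: (1,13); (6,36); (5,30)]; [:: (6,13); (3,23); (1,21)]; [:: (4,26); (5,20); (0,23)]; [:: (3,0); (2,7); (7,24)]; [:: (6,26); (7,7); (3,10)]; [:: (4,13); (0,7); (7,23)]];
     [:: [:: (1,0); (3,15); (2,14)]; [:: (5,0); (3,2); (6,4)]; [:: (2,13); (0,15); (6,27)]; [:: (0,13); (4,2); (2,27)]; [:: (5,26); (6,14); (1,32)]; [:: (4,0); (3,1); (7,6)]; [:: (0,26); (7,1); (4,28)]; [:: (5,13); (1,1); (7,29)]];
     [:: [:: (1,0); (3,21); (2,17)]; [:: (5,0); (3,8); (6,16)]; [:: (2,13); (0,21); (6,30)]; [:: (0,13); (4,8); (2,30)]; [:: (5,26); (6,17); (1,11)]; [:: (4,0); (3,4); (7,24)]; [:: (0,26); (7,4); (4,34)]; [:: (5,13); (1,4); (7,38)]];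
     [:: [:: (1,0); (3,6); (2,29)]; [:: (5,0); (3,32); (6,25)]; [:: (2,13); (0,6); (6,3)]; [:: (0,13); (4,32); (2,3)]; [:: (5,26); (6,29); (1,5)]; [:: (4,0); (3,16); (7,18)]; [:: (0,26); (7,16); (4,19)]; [:: (5,13); (1,16); (7,35)]];
     [:: [:: (1,0); (3,24); (2,38)]; [:: (5,0); (3,11); (6,22)]; [:: (2,13); (0,24); (6,12)]; [:: (0,13); (4,11); (2,12)]; [:: (5,26); (6,38); (1,20)]; [:: (4,0); (3,25); (7,33)]; [:: (0,26); (7,25); (4,37)]; [:: (5,13); (1,25); (7,23)]];
     [:: [:: (1,0); (3,18); (2,35)]; [:: (5,0); (3,5); (6,10)]; [:: (2,13); (0,18); (6,9)]; [:: (0,13); (4,5); (2,9)]; [:: (5,26); (6,35); (1,2)]; [:: (4,0); (3,22); (7,15)]; [:: (0,26); (7,22); (4,31)]; [:: (5,13); (1,22); (7,14)]];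
     [:: [:: (1,0); (3,33); (2,23)]; [:: (5,0); (3,20); (6,1)]; [:: (2,13); (0,33); (6,36)]; [:: (0,13); (4,20); (2,36)]; [:: (5,26); (6,23); (1,8)]; [:: (4,0); (3,10); (7,21)]; [:: (0,26); (7,10); (4,7)]; [:: (5,13); (1,10); (7,17)]];
     [:: [:: (2,0); (4,15); (3,17)]; [:: (6,0); (4,14); (0,28)]; [:: (3,13); (1,27); (0,3)]; [:: (1,13); (5,2); (3,27)]; [:: (6,26); (0,2); (2,5)]; [:: (5,0); (4,28); (7,30)]; [:: (1,26); (7,1); (5,19)]; [:: (6,13); (2,1); (7,2)]];
     [:: [:: (2,0); (4,21); (3,29)]; [:: (6,0); (4,17); (0,34)]; [:: (3,13); (1,30); (0,12)]; [:: (1,13); (5,8); (3,30)]; [:: (6,26); (0,8); (2,20)]; [:: (5,0); (4,34); (7,3)]; [:: (1,26); (7,4); (5,37)]; [:: (6,13); (2,4); (7,8)]];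
     [:: [:: (2,0); (4,6); (3,38)]; [:: (6,0); (4,29); (0,19)]; [:: (3,13); (1,3); (0,9)]; [:: (1,13); (5,32); (3,3)]; [:: (6,26); (0,32); (2,2)]; [:: (5,0); (4,19); (7,12)]; [:: (1,26); (7,16); (5,31)]; [:: (6,13); (2,16); (7,32)]];
     [:: [:: (2,0); (4,24); (3,35)]; [:: (6,0); (4,38); (0,37)]; [:: (3,13); (1,12); (0,36)]; [:: (1,13); (5,11); (3,12)]; [:: (6,26); (0,11); (2,8)]; [:: (5,0); (4,37); (7,9)]; [:: (1,26); (7,25); (5,7)]; [:: (6,13); (2,25); (7,11)]];
     [:: [:: (2,0); (4,18); (3,23)]; [:: (6,0); (4,35); (0,31)]; [:: (3,13); (1,9); (0,27)]; [:: (1,13); (5,5); (3,9)]; [:: (6,26); (0,5); (2,32)]; [:: (5,0); (4,31); (7,36)]; [:: (1,26); (7,22); (5,28)]; [:: (6,13); (2,22); (7,5)]];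
     [:: [:: (2,0); (4,33); (3,14)]; [:: (6,0); (4,23); (0,7)]; [:: (3,13); (1,36); (0,30)]; [:: (1,13); (5,20); (3,36)]; [:: (6,26); (0,20); (2,11)]; [:: (5,0); (4,7); (7,27)]; [:: (1,26); (7,10); (5,34)]; [:: (6,13); (2,10); (7,20)]];
     [:: [:: (5,0); (7,26); (4,26)]; [:: (0,13); (3,0); (6,26)]; [:: (6,0); (5,26); (3,26)]; [:: (0,0); (1,26); (4,13)]; [:: (4,0); (7,13); (3,13)]; [:: (2,0); (6,13); (1,13)]; [:: (1,0); (2,13); (5,13)]; [:: (2,26); (7,0); (0,26)]]].

Definition quads43 : seq (seq (nat * nat)) :=
  [:: [:: (0,0); (1,13); (3,0); (7,26)];
     [:: (0,0); (4,26); (5,13); (6,0)];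
     [:: (1,0); (4,13); (6,13); (7,0)];
     [:: (1,0); (2,0); (3,0); (4,0)];
     [:: (0,0); (1,0); (3,13); (5,0)];
     [:: (0,0); (2,13); (5,26); (7,0)];
     [:: (0,0); (2,26); (4,0); (6,26)];
     [:: (1,0); (5,26); (6,26); (7,26)];
     [:: (2,0); (3,13); (4,26); (5,26)];
     [:: (2,0); (3,26); (6,26); (7,0)]].

Definition classes44 : seq (seq (seq (nat * nat))) :=
  [:: [:: [:: (3,0); (5,27); (4,32)]; [:: (0,0); (5,14); (1,28)]; [:: (4,13); (2,15); (1,18)]; [:: (2,13); (6,2); (4,18)]; [:: (0,26); (1,14); (3,2)]; [:: (6,0); (5,28); (7,18)]; [:: (2,26); (7,28); (6,31)]; [:: (0,13); (3,1); (7,2)]];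
     [:: [:: (3,0); (5,30); (4,11)]; [:: (0,0); (5,17); (1,34)]; [:: (4,13); (2,21); (1,33)]; [:: (2,13); (6,8); (4,33)]; [:: (0,26); (1,17); (3,8)]; [:: (6,0); (5,34); (7,33)]; [:: (2,26); (7,34); (6,7)]; [:: (0,13); (3,4); (7,8)]];
     [:: [:: (3,0); (5,3); (4,5)]; [:: (0,0); (5,29); (1,19)]; [:: (4,13); (2,6); (1,15)]; [:: (2,13); (6,32); (4,15)]; [:: (0,26); (1,29); (3,32)]; [:: (6,0); (5,19); (7,15)]; [:: (2,26); (7,19); (6,28)]; [:: (0,13); (3,16); (7,32)]];
     [:: [:: (3,0); (5,12); (4,20)]; [:: (0,0); (5,38); (1,37)]; [:: (4,13); (2,24); (1,21)]; [:: (2,13); (6,11); (4,21)]; [:: (0,26); (1,38); (3,11)]; [:: (6,0); (5,37); (7,21)]; [:: (2,26); (7,37); (6,34)]; [:: (0,13); (3,25); (7,11)]];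
     [:: [:: (3,0); (5,9); (4,2)]; [:: (0,0); (5,35); (1,31)]; [:: (4,13); (2,18); (1,6)]; [:: (2,13); (6,5); (4,6)]; [:: (0,26); (1,35); (3,5)]; [:: (6,0); (5,31); (7,6)]; [:: (2,26); (7,31); (6,19)]; [:: (0,13); (3,22); (7,5)]];
     [:: [:: (3,0); (5,36); (4,8)]; [:: (0,0); (5,23); (1,7)]; [:: (4,13); (2,33); (1,24)]; [:: (2,13); (6,20); (4,24)]; [:: (0,26); (1,23); (3,20)]; [:: (6,0); (5,7); (7,24)]; [:: (2,26); (7,7); (6,37)]; [:: (0,13); (3,10); (7,20)]];
     [:: [:: (4,0); (6,15); (5,17)]; [:: (1,0); (6,2); (2,31)]; [:: (5,13); (3,27); (2,6)]; [:: (3,13); (0,14); (5,6)]; [:: (1,26); (2,2); (4,5)]; [:: (0,0); (6,1); (7,15)]; [:: (3,26); (7,1); (0,28)]; [:: (1,13); (4,1); (7,29)]];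
     [:: [:: (4,0); (6,21); (5,29)]; [:: (1,0); (6,8); (2,7)]; [:: (5,13); (3,30); (2,24)]; [:: (3,13); (0,17); (5,24)]; [:: (1,26); (2,8); (4,20)]; [:: (0,0); (6,4); (7,21)]; [:: (3,26); (7,4); (0,34)]; [:: (1,13); (4,4); (7,38)]];
     [:: [:: (4,0); (6,6); (5,38)]; [:: (1,0); (6,32); (2,28)]; [:: (5,13); (3,3); (2,18)]; [:: (3,13); (0,29); (5,18)]; [:: (1,26); (2,32); (4,2)]; [:: (0,0); (6,16); (7,6)]; [:: (3,26); (7,16); (0,19)]; [:: (1,13); (4,16); (7,35)]];
     [:: [:: (4,0); (6,24); (5,35)]; [:: (1,0); (6,11); (2,34)]; [:: (5,13); (3,12); (2,33)]; [:: (3,13); (0,38); (5,33)]; [:: (1,26); (2,11); (4,8)]; [:: (0,0); (6,25); (7,24)]; [:: (3,26); (7,25); (0,37)]; [:: (1,13); (4,25); (7,23)]];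
     [:: [:: (4,0); (6,18); (5,23)]; [:: (1,0); (6,5); (2,19)]; [:: (5,13); (3,9); (2,15)]; [:: (3,13); (0,35); (5,15)]; [:: (1,26); (2,5); (4,32)]; [:: (0,0); (6,22); (7,18)]; [:: (3,26); (7,22); (0,31)]; [:: (1,13); (4,22); (7,14)]];
     [:: [:: (4,0); (6,33); (5,14)]; [:: (1,0); (6,20); (2,37)]; [:: (5,13); (3,36); (2,21)]; [:: (3,13); (0,23); (5,21)]; [:: (1,26); (2,20); (4,11)]; [:: (0,0); (6,10); (7,33)]; [:: (3,26); (7,10); (0,7)]; [:: (1,13); (4,10); (7,17)]];
     [:: [:: (5,0); (0,15); (6,14)]; [:: (2,0); (0,14); (3,19)]; [:: (6,13); (4,15); (3,18)]; [:: (4,13); (1,2); (6,18)]; [:: (2,26); (3,14); (5,32)]; [:: (1,0); (0,28); (7,30)]; [:: (4,26); (7,1); (1,16)]; [:: (2,13); (5,1); (7,32)]];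
     [:: [:: (5,0); (0,21); (6,17)]; [:: (2,0); (0,17); (3,37)]; [:: (6,13); (4,21); (3,33)]; [:: (4,13); (1,8); (6,33)]; [:: (2,26); (3,17); (5,11)]; [:: (1,0); (0,34); (7,3)]; [:: (4,26); (7,4); (1,25)]; [:: (2,13); (5,4); (7,11)]];
     [:: [:: (5,0); (0,6); (6,29)]; [:: (2,0); (0,29); (3,31)]; [:: (6,13); (4,6); (3,15)]; [:: (4,13); (1,32); (6,15)]; [:: (2,26); (3,29); (5,5)]; [:: (1,0); (0,19); (7,12)]; [:: (4,26); (7,16); (1,22)]; [:: (2,13); (5,16); (7,5)]];
     [:: [:: (5,0); (0,24); (6,38)]; [:: (2,0); (0,38); (3,7)]; [:: (6,13); (4,24); (3,21)]; [:: (4,13); (1,11); (6,21)]; [:: (2,26); (3,38); (5,20)]; [:: (1,0); (0,37); (7,9)]; [:: (4,26); (7,25); (1,10)]; [:: (2,13); (5,25); (7,20)]];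
     [:: [:: (5,0); (0,18); (6,35)]; [:: (2,0); (0,35); (3,28)]; [:: (6,13); (4,18); (3,6)]; [:: (4,13); (1,5); (6,6)]; [:: (2,26); (3,35); (5,2)]; [:: (1,0); (0,31); (7,36)]; [:: (4,26); (7,22); (1,1)]; [:: (2,13); (5,22); (7,2)]];
     [:: [:: (5,0); (0,33); (6,23)]; [:: (2,0); (0,23); (3,34)]; [:: (6,13); (4,33); (3,24)]; [:: (4,13); (1,20); (6,24)]; [:: (2,26); (3,23); (5,8)]; [:: (1,0); (0,7); (7,27)]; [:: (4,26); (7,10); (1,4)]; [:: (2,13); (5,10); (7,8)]];
     [:: [:: (6,0); (1,27); (0,2)]; [:: (3,0); (1,2); (4,1)]; [:: (0,13); (5,15); (4,27)]; [:: (5,13); (2,14); (0,3)]; [:: (3,26); (4,2); (6,5)]; [:: (2,0); (1,28); (7,30)]; [:: (5,26); (7,28); (2,4)]; [:: (3,13); (6,1); (7,2)]];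
     [:: [:: (6,0); (1,30); (0,8)]; [:: (3,0); (1,8); (4,4)]; [:: (0,13); (5,21); (4,30)]; [:: (5,13); (2,17); (0,12)]; [:: (3,26); (4,8); (6,20)]; [:: (2,0); (1,34); (7,3)]; [:: (5,26); (7,34); (2,16)]; [:: (3,13); (6,4); (7,8)]];
     [:: [:: (6,0); (1,3); (0,32)]; [:: (3,0); (1,32); (4,16)]; [:: (0,13); (5,6); (4,3)]; [:: (5,13); (2,29); (0,9)]; [:: (3,26); (4,32); (6,2)]; [:: (2,0); (1,19); (7,12)]; [:: (5,26); (7,19); (2,25)]; [:: (3,13); (6,16); (7,32)]];
     [:: [:: (6,0); (1,12); (0,11)]; [:: (3,0); (1,11); (4,25)]; [:: (0,13); (5,24); (4,12)]; [:: (5,13); (2,38); (0,36)]; [:: (3,26); (4,11); (6,8)]; [:: (2,0); (1,37); (7,9)]; [:: (5,26); (7,37); (2,22)]; [:: (3,13); (6,25); (7,11)]];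
     [:: [:: (6,0); (1,9); (0,5)]; [:: (3,0); (1,5); (4,22)]; [:: (0,13); (5,18); (4,9)]; [:: (5,13); (2,35); (0,27)]; [:: (3,26); (4,5); (6,32)]; [:: (2,0); (1,31); (7,36)]; [:: (5,26); (7,31); (2,10)]; [:: (3,13); (6,22); (7,5)]];
     [:: [:: (6,0); (1,36); (0,20)]; [:: (3,0); (1,20); (4,10)]; [:: (0,13); (5,33); (4,36)]; [:: (5,13); (2,23); (0,30)]; [:: (3,26); (4,20); (6,11)]; [:: (2,0); (1,7); (7,27)]; [:: (5,26); (7,7); (2,1)]; [:: (3,13); (6,10); (7,20)]];
     [:: [:: (0,0); (2,15); (1,14)]; [:: (4,0); (2,14); (5,16)]; [:: (1,13); (6,27); (5,3)]; [:: (6,13); (3,14); (1,6)]; [:: (4,26); (5,2); (0,14)]; [:: (3,0); (2,28); (7,18)]; [:: (6,26); (7,28); (3,1)]; [:: (4,13); (0,28); (7,14)]];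
     [:: [:: (0,0); (2,21); (1,17)]; [:: (4,0); (2,17); (5,25)]; [:: (1,13); (6,30); (5,12)]; [:: (6,13); (3,17); (1,24)]; [:: (4,26); (5,8); (0,17)]; [:: (3,0); (2,34); (7,33)]; [:: (6,26); (7,34); (3,4)]; [:: (4,13); (0,34); (7,17)]];
     [:: [:: (0,0); (2,6); (1,29)]; [:: (4,0); (2,29); (5,22)]; [:: (1,13); (6,3); (5,9)]; [:: (6,13); (3,29); (1,18)]; [:: (4,26); (5,32); (0,29)]; [:: (3,0); (2,19); (7,15)]; [:: (6,26); (7,19); (3,16)]; [:: (4,13); (0,19); (7,29)]];
     [:: [:: (0,0); (2,24); (1,38)]; [:: (4,0); (2,38); (5,10)]; [:: (1,13); (6,12); (5,36)]; [:: (6,13); (3,38); (1,33)]; [:: (4,26); (5,11); (0,38)]; [:: (3,0); (2,37); (7,21)]; [:: (6,26); (7,37); (3,25)]; [:: (4,13); (0,37); (7,38)]];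
     [:: [:: (0,0); (2,18); (1,35)]; [:: (4,0); (2,35); (5,1)]; [:: (1,13); (6,9); (5,27)]; [:: (6,13); (3,35); (1,15)]; [:: (4,26); (5,5); (0,35)]; [:: (3,0); (2,31); (7,6)]; [:: (6,26); (7,31); (3,22)]; [:: (4,13); (0,31); (7,35)]];
     [:: [:: (0,0); (2,33); (1,23)]; [:: (4,0); (2,23); (5,4)]; [:: (1,13); (6,36); (5,30)]; [:: (6,13); (3,23); (1,21)]; [:: (4,26); (5,20); (0,23)]; [:: (3,0); (2,7); (7,24)]; [:: (6,26); (7,7); (3,10)]; [:: (4,13); (0,7); (7,23)]];
     [:: [:: (1,0); (3,15); (2,14)]; [:: (5,0); (3,2); (6,4)]; [:: (2,13); (0,15); (6,27)]; [:: (0,13); (4,2); (2,27)]; [:: (5,26); (6,14); (1,32)]; [:: (4,0); (3,1); (7,6)]; [:: (0,26); (7,1); (4,28)]; [:: (5,13); (1,1); (7,29)]];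
     [:: [:: (1,0); (3,21); (2,17)]; [:: (5,0); (3,8); (6,16)]; [:: (2,13); (0,21); (6,30)]; [:: (0,13); (4,8); (2,30)]; [:: (5,26); (6,17); (1,11)]; [:: (4,0); (3,4); (7,24)]; [:: (0,26); (7,4); (4,34)]; [:: (5,13); (1,4); (7,38)]];
     [:: [:: (1,0); (3,6); (2,29)]; [:: (5,0); (3,32); (6,25)]; [:: (2,13); (0,6); (6,3)]; [:: (0,13); (4,32); (2,3)]; [:: (5,26); (6,29); (1,5)]; [:: (4,0); (3,16); (7,18)]; [:: (0,26); (7,16); (4,19)]; [:: (5,13); (1,16); (7,35)]];
     [:: [:: (1,0); (3,24); (2,38)]; [:: (5,0); (3,11); (6,22)]; [:: (2,13); (0,24); (6,12)]; [:: (0,13); (4,11); (2,12)]; [:: (5,26); (6,38); (1,20)]; [:: (4,0); (3,25); (7,33)]; [:: (0,26); (7,25); (4,37)]; [:: (5,13); (1,25); (7,23)]];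
     [:: [:: (1,0); (3,18); (2,35)]; [:: (5,0); (3,5); (6,10)]; [:: (2,13); (0,18); (6,9)]; [:: (0,13); (4,5); (2,9)]; [:: (5,26); (6,35); (1,2)]; [:: (4,0); (3,22); (7,15)]; [:: (0,26); (7,22); (4,31)]; [:: (5,13); (1,22); (7,14)]];
     [:: [:: (1,0); (3,33); (2,23)]; [:: (5,0); (3,20); (6,1)]; [:: (2,13); (0,33); (6,36)]; [:: (0,13); (4,20); (2,36)]; [:: (5,26); (6,23); (1,8)]; [:: (4,0); (3,10); (7,21)]; [:: (0,26); (7,10); (4,7)]; [:: (5,13); (1,10); (7,17)]];
     [:: [:: (2,0); (4,15); (3,17)]; [:: (6,0); (4,14); (0,28)]; [:: (3,13); (1,27); (0,3)]; [:: (1,13); (5,2); (3,27)]; [:: (6,26); (0,2); (2,5)]; [:: (5,0); (4,28); (7,30)]; [:: (1,26); (7,1); (5,19)]; [:: (6,13); (2,1); (7,2)]];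
     [:: [:: (2,0); (4,21); (3,29)]; [:: (6,0); (4,17); (0,34)]; [:: (3,13); (1,30); (0,12)]; [:: (1,13); (5,8); (3,30)]; [:: (6,26); (0,8); (2,20)]; [:: (5,0); (4,34); (7,3)]; [:: (1,26); (7,4); (5,37)]; [:: (6,13); (2,4); (7,8)]];
     [:: [:: (2,0); (4,6); (3,38)]; [:: (6,0); (4,29); (0,19)]; [:: (3,13); (1,3); (0,9)]; [:: (1,13); (5,32); (3,3)]; [:: (6,26); (0,32); (2,2)]; [:: (5,0); (4,19); (7,12)]; [:: (1,26); (7,16); (5,31)]; [:: (6,13); (2,16); (7,32)]];
     [:: [:: (2,0); (4,24); (3,35)]; [:: (6,0); (4,38); (0,37)]; [:: (3,13); (1,12); (0,36)]; [:: (1,13); (5,11); (3,12)]; [:: (6,26); (0,11); (2,8)]; [:: (5,0); (4,37); (7,9)]; [:: (1,26); (7,25); (5,7)]; [:: (6,13); (2,25); (7,11)]];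
     [:: [:: (2,0); (4,18); (3,23)]; [:: (6,0); (4,35); (0,31)]; [:: (3,13); (1,9); (0,27)]; [:: (1,13); (5,5); (3,9)]; [:: (6,26); (0,5); (2,32)]; [:: (5,0); (4,31); (7,36)]; [:: (1,26); (7,22); (5,28)]; [:: (6,13); (2,22); (7,5)]];
     [:: [:: (2,0); (4,33); (3,14)]; [:: (6,0); (4,23); (0,7)]; [:: (3,13); (1,36); (0,30)]; [:: (1,13); (5,20); (3,36)]; [:: (6,26); (0,20); (2,11)]; [:: (5,0); (4,7); (7,27)]; [:: (1,26); (7,10); (5,34)]; [:: (6,13); (2,10); (7,20)]];
     [:: [:: (0,0); (1,13); (4,0)]; [:: (0,13); (2,26); (6,26)]; [:: (1,0); (2,13); (5,13)]; [:: (1,26); (6,0); (7,13)]; [:: (3,13); (5,26); (7,0)]; [:: (0,26); (4,13); (7,26)]; [:: (2,0); (3,26); (6,13)]; [:: (3,0); (4,26); (5,0)]];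
     [:: [:: (1,0); (0,13); (5,0)]; [:: (1,13); (3,26); (7,26)]; [:: (0,0); (3,13); (4,13)]; [:: (0,26); (7,0); (6,13)]; [:: (2,13); (4,26); (6,0)]; [:: (1,26); (5,13); (6,26)]; [:: (3,0); (2,26); (7,13)]; [:: (2,0); (5,26); (4,0)]]].

Definition quads44 : seq (seq (nat * nat)) :=
  [:: [:: (0,0); (1,0); (2,0); (3,0)];
     [:: (4,0); (5,0); (6,0); (7,0)];
     [:: (0,0); (2,26); (5,0); (7,26)];
     [:: (1,0); (3,26); (4,0); (6,26)];
     [:: (0,0); (3,26); (5,13); (6,0)];
     [:: (1,0); (2,26); (4,13); (7,0)]].

Theorem lemma2p2 :
  forall g : nat, g \in [:: 120; 123; 126; 129; 132] ->
    exists_4GDD [:: (39, 8); (g, 1)].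
Proof.
move=> g; rewrite !inE => /orP[/eqP->|/or4P[]/eqP->].
- by apply: (@exists_4GDD_39_8 classes40 quads40); vm_compute.
- by apply: (@exists_4GDD_39_8 classes41 quads41); vm_compute.
- by apply: (@exists_4GDD_39_8 classes42 quads42); vm_compute.
- by apply: (@exists_4GDD_39_8 classes43 quads43); vm_compute.
- by apply: (@exists_4GDD_39_8 classes44 quads44); vm_compute.
Qed.
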